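(* For every $n\ge1$ and indices $i_1,\dots,i_n\in\{1,\dots,N\}$, setting $t=1$, $$\tilde\omega_{N,t=1}(\sigma_{i_1}\sigma_{i_2}\cdots\sigma_{i_n})=\omega_{N+1}(\sigma_{i_1}\sigma_{i_2}\cdots\sigma_{i_n}\sigma_{N+1}^n)+O(1/N)$$ as $N\to\infty$. Consequently, in the thermodynamic limit at $t=1$, the (quenched, replicated) Boltzmann average of a fillable multi-overlap monomial equals the Boltzmann average of the corresponding filled multi-overlap monomial.
   Context: Diluted two-body model: $\sigma\in\{-1,1\}^N$, $H_N(\sigma,\alpha)=-\sum_{\nu=1}^{P_{\alpha N}}\sigma_{i_\nu}\sigma_{j_\nu}$ with $P_{\alpha N}$ Poisson of mean $\alpha N$ and $\{i_\nu\},\{j_\nu\}$ i.i.d. uniform on $\{1,\dots,N\}$; $\omega_N$ is the Boltzmann state $\omega_N(g)=Z_N^{-1}\sum_\sigma g(\sigma)e^{-\beta H_N(\sigma,\alpha)}$, and $\omega_{N+1}$ is the same object for $N+1$ spins at connectivity $\alpha$. With $\tilde\alpha=\frac N{N+1}\alpha$, the $t$-dependent state is $$\tilde\omega_{N,t}(g)=\frac{1}{Z_{N,t}}\sum_\sigma g(\sigma)\exp\Big(\beta\sum_{\nu=1}^{P_{\tilde\alpha N}}\sigma_{i_\nu}\sigma_{j_\nu}+\beta\sum_{\nu=1}^{P'_{2\tilde\alpha t}}\sigma_{k_\nu}\Big),$$ $P'_{2\tilde\alpha t}$ Poisson of mean $2\tilde\alpha t$, $\{k_\nu\}$ i.i.d.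 uniform on $\{1,\dots,N\}$, independent of everything, $Z_{N,t}$ the normalization. Multi-overlaps of replicas $\sigma^{(1)},\sigma^{(2)},\dots$ (i.i.d. copies under the same quenched disorder) are $q_{a_1\cdots a_n}=\frac1N\sum_{i=1}^N\sigma_i^{(a_1)}\cdots\sigma_i^{(a_n)}$, with $m_a=q_a$. A monomial in the multi-overlaps is called filled (stochastically stable) if every replica index appears in it an even number of times (e.g. $q_{12}^2$, $m^2$, $q_{12}q_{34}q_{1234}$), and fillable otherwise (e.g. $q_{12}$, $m$, $q_{12}q_{34}$). *)

From Stdlib Require Import Reals List Arith Lia.
From Stdlib Require Import ClassicalEpsilon.
Import ListNotations.
Open Scope R_scope.

(** Conventions: sites are 0-based, so the paper's sites 1..N are 0..N-1
    and the extra spin N+1 of the (N+1)-system is site N.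
    A spin configuration on N sites is a list of N booleans; true = +1. *)

Fixpoint sumR (l : list R) : R :=
  match l with [] => 0 | x :: l => x + sumR l end.
Fixpoint prodR (l : list R) : R :=
  match l with [] => 1 | x :: l => x * prodR l end.

Fixpoint configs (N : nat) : list (list bool) :=
  match N with
  | O => [[]]
  | S n => map (cons true) (configs n) ++ map (cons false) (configs n)
  end.

Definition spin (s : list bool) (i : nat) : R :=
  if nth i s false then 1 else -1.

(** all lists of length P with entries in xs (P i.i.d. uniform draws) *)
Fixpoint tuples {A : Type} (xs : list A) (P : nat) : list (list A) :=
  match P with
  | O => [[]]
  | S p => flat_map (fun x => map (cons x) (tuples xs p)) xs
  end.

Definition avg_list {A : Type} (l : list A) (f : A -> R) : R :=
  sumR (map f l) / INR (length l).

Definition sites (N : nat) : list nat := seq 0 N.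
Definition pairs (N : nat) : list (nat * nat) := list_prod (sites N) (sites N).

Definition series (f : nat -> R) : R :=
  epsilon (inhabits 0) (fun l => infinite_sum f l).

Definition poisson (lam : R) (k : nat) : R :=
  exp (- lam) * lam ^ k / INR (fact k).

Definition ham (E : list (nat * nat)) (s : list bool) : R :=
  - sumR (map (fun e => spin s (fst e) * spin s (snd e)) E).

Definition field (K : list nat) (s : list bool) : R :=
  sumR (map (fun k => spin s k) K).

Definition weight (beta : R) (E : list (nat * nat)) (K : list nat)
  (s : list bool) : R :=
  exp (- beta * ham E s + beta * field K s).

Definition omega (N : nat) (beta : R) (E : list (nat * nat)) (K : list nat)
  (g : list bool -> R) : R :=
  sumR (map (fun s => g s * weight beta E K s) (configs N)) /
  sumR (map (fun s => weight beta E K s) (configs N)).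

Definition Omega (N : nat) (beta : R) (E : list (nat * nat)) (K : list nat)
  (m : nat) (G : list (list bool) -> R) : R :=
  sumR (map (fun ss => G ss * prodR (map (weight beta E K) ss))
            (tuples (configs N) m)) /
  sumR (map (fun ss => prodR (map (weight beta E K) ss))
            (tuples (configs N) m)).

(** Quenched average for the N+1 (or any M) spin system at connectivity alpha:
    P ~ Poisson(alpha M), edges i.i.d. uniform in {0..M-1}^2. *)
Definition qexp_bulk (M : nat) (alpha : R) (F : list (nat * nat) -> R) : R :=
  series (fun P => poisson (alpha * INR M) P *
                   avg_list (tuples (pairs M) P) F).

Definition tilde_alpha (N : nat) (alpha : R) : R := INR N / INR (N + 1) * alpha.

(** Quenched average for the t-dependent state on N spins:
    P ~ Poisson(tilde_alpha N), P' ~ Poisson(2 tilde_alpha t), independent,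
    edges i.i.d. uniform in {0..N-1}^2, k_nu i.i.d. uniform in {0..N-1}. *)
Definition qexp_t (N : nat) (alpha t : R)
  (F : list (nat * nat) -> list nat -> R) : R :=
  series (fun P => poisson (tilde_alpha N alpha * INR N) P *
    avg_list (tuples (pairs N) P) (fun E =>
      series (fun P' => poisson (2 * tilde_alpha N alpha * t) P' *
        avg_list (tuples (sites N) P') (fun K => F E K)))).

Definition spin_mono (s : list bool) (idx : list nat) : R :=
  prodR (map (spin s) idx).

(** multi-overlap q_A = (1/M) sum_i prod_{a in A} sigma_i^{(a)}
    (replica indices 0-based) *)
Definition overlap (M : nat) (A : list nat) (ss : list (list bool)) : R :=
  / INR M * sumR (map (fun i => prodR (map (fun a => spin (nth a ss []) i) A))
                      (sites M)).

(** a monomial in the multi-overlaps: a list of index sets A, meaning prod_A q_A *)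
Definition mono_val (M : nat) (mono : list (list nat)) (ss : list (list bool)) : R :=
  prodR (map (fun A => overlap M A ss) mono).

Definition occ (a : nat) (mono : list (list nat)) : nat :=
  list_sum (map (fun A => count_occ Nat.eq_dec A a) mono).

Definition valid_mono (m : nat) (mono : list (list nat)) : Prop :=
  Forall (fun A => A <> [] /\ NoDup A /\ Forall (fun a => (a < m)%nat) A) mono.

Definition filled (m : nat) (mono : list (list nat)) : Prop :=
  forall a, (a < m)%nat -> Nat.even (occ a mono) = true.

Definition fillable (m : nat) (mono : list (list nat)) : Prop := ~ filled m mono.

Definition odd_set (m : nat) (mono : list (list nat)) : list nat :=
  filter (fun a => Nat.odd (occ a mono)) (seq 0 m).

Definition fill (m : nat) (mono : list (list nat)) : list (list nat) :=
  mono ++ [odd_set m mono].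

From Stdlib Require Import Reals List Arith Lia Lra Permutation FunctionalExtensionality ClassicalEpsilon.
Import ListNotations.
Open Scope R_scope.

(** Draw the [Poisson(α(N+1))] uniform edges of the [(N+1)]-spin system and
    sort them into bulk edges (both ends among the first [N] sites), mixed edges
    (one end at the extra site [N]) and loops [(N, N)].  By Poisson thinning these
    are independent Poisson samples; the bulk part has mean [α̃N] and, since every
    site is the inner end of exactly two mixed pairs, the inner ends of the mixed
    edges form a Poisson([2α̃]) sample of uniform sites.  The gauge map
    [σ ↦ σ_{N+1} σ] turns mixed edges into the one-body field of the [t = 1] state
    and loops into a constant.  Hence, for every gauge-invariant observable, the
    quenched [(N+1)]-spin state equals the quenched [t = 1] state on [N] spins
    exactly ([bulk_state_gauge_fixed]).  Part 1 follows with error constant 0.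
    For part 2, the filled monomial is not gauge invariant as such, but by
    exchange symmetry of the sites it may be replaced by its average over the
    choice of the extra site, which is within [2 |mono| / N] of the filled
    monomial on [N+1] spins ([fillable_filled_bound]). *)

Notation sumL l f := (sumR (map f l)).

Lemma sumR_app l1 l2 : sumR (l1 ++ l2) = sumR l1 + sumR l2.
Proof. induction l1; simpl; [lra | rewrite IHl1; lra]. Qed.

Lemma sumL_app {A} (l1 l2 : list A) f : sumL (l1 ++ l2) f = sumL l1 f + sumL l2 f.
Proof. rewrite map_app, sumR_app; reflexivity. Qed.

Lemma sumL_ext_in {A} (l : list A) f g :
  (forall x, In x l -> f x = g x) -> sumL l f = sumL l g.
Proof. intros H; f_equal; apply map_ext_in; auto. Qed.

Lemma sumL_ext {A} (l : list A) f g : (forall x, f x = g x) -> sumL l f = sumL l g.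
Proof. intros; apply sumL_ext_in; auto. Qed.

Lemma sumL_plus {A} (l : list A) f g :
  sumL l (fun x => f x + g x) = sumL l f + sumL l g.
Proof. induction l; simpl; [lra | rewrite IHl; lra]. Qed.

Lemma sumL_minus {A} (l : list A) f g :
  sumL l (fun x => f x - g x) = sumL l f - sumL l g.
Proof. induction l; simpl; [lra | rewrite IHl; lra]. Qed.

Lemma sumL_scal {A} (l : list A) c f : sumL l (fun x => c * f x) = c * sumL l f.
Proof. induction l; simpl; [lra | rewrite IHl; lra]. Qed.

Lemma sumL_scal_r {A} (l : list A) c f : sumL l (fun x => f x * c) = sumL l f * c.
Proof. induction l; simpl; [lra | rewrite IHl; lra]. Qed.

Lemma sumL_const {A} (l : list A) c : sumL l (fun _ => c) = INR (length l) * c.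
Proof. induction l; simpl map; simpl sumR; [simpl; lra | rewrite IHl, length_cons, S_INR; lra]. Qed.

Lemma sumL_perm {A} (l l' : list A) f : Permutation l l' -> sumL l f = sumL l' f.
Proof. induction 1; simpl; lra. Qed.

Lemma sumL_map {A B} (l : list A) (g : A -> B) f :
  sumL (map g l) f = sumL l (fun x => f (g x)).
Proof. rewrite map_map; reflexivity. Qed.

Lemma sumL_flat_map {A B} (l : list A) (g : A -> list B) f :
  sumL (flat_map g l) f = sumL l (fun x => sumL (g x) f).
Proof. induction l; simpl; auto. rewrite sumL_app, IHl; reflexivity. Qed.

Lemma sumL_filter {A} (l : list A) (p : A -> bool) f :
  sumL l f = sumL (filter p l) f + sumL (filter (fun x => negb (p x)) l) f.
Proof. induction l; simpl; [lra|]. destruct (p a); simpl; rewrite IHl; lra. Qed.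

Lemma sumL_swap {A B} (l1 : list A) (l2 : list B) f :
  sumL l1 (fun x => sumL l2 (fun y => f x y)) = sumL l2 (fun y => sumL l1 (fun x => f x y)).
Proof.
  induction l1; simpl.
  - rewrite sumL_const; lra.
  - rewrite IHl1, <- sumL_plus; reflexivity.
Qed.

Lemma sumL_le {A} (l : list A) f g :
  (forall x, In x l -> f x <= g x) -> sumL l f <= sumL l g.
Proof.
  induction l; intros H; simpl; [lra|].
  assert (f a <= g a) by (apply H; left; auto).
  assert (sumL l f <= sumL l g) by (apply IHl; intros; apply H; right; auto). lra.
Qed.

Lemma sumL_pos {A} (l : list A) f :
  (forall x, In x l -> 0 < f x) -> l <> [] -> 0 < sumL l f.
Proof.
  destruct l as [|a l]; intros H Hn; [congruence|]. simpl.
  assert (0 < f a) by (apply H; left; auto).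
  assert (0 <= sumL l f).
  { rewrite <- (Rmult_0_r (INR (length l))), <- sumL_const.
    apply sumL_le; intros; left; apply H; right; auto. }
  lra.
Qed.

Lemma sumL_abs_le {A} (l : list A) f B :
  (forall x, In x l -> Rabs (f x) <= B) -> Rabs (sumL l f) <= INR (length l) * B.
Proof.
  rewrite <- sumL_const. induction l; intros H; simpl; [rewrite Rabs_R0; lra|].
  eapply Rle_trans; [apply Rabs_triang|].
  apply Rplus_le_compat; [apply H; left; auto | apply IHl; intros; apply H; right; auto].
Qed.

Lemma sumL_sum_f {A} (l : list A) (f : A -> nat -> R) n :
  sumL l (fun x => sum_f_R0 (f x) n) = sum_f_R0 (fun k => sumL l (fun x => f x k)) n.
Proof. induction n; simpl; auto. rewrite sumL_plus, IHn; reflexivity. Qed.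

Lemma prodR_app (l1 l2 : list R) : prodR (l1 ++ l2) = prodR l1 * prodR l2.
Proof. induction l1; simpl; [ring | rewrite IHl1; ring]. Qed.

Lemma prodR_ext_in {A} (l : list A) f g :
  (forall x, In x l -> f x = g x) -> prodR (map f l) = prodR (map g l).
Proof. intros H; f_equal; apply map_ext_in; auto. Qed.

Lemma prodR_mult {A} (l : list A) f g :
  prodR (map (fun x => f x * g x) l) = prodR (map f l) * prodR (map g l).
Proof. induction l; simpl; [lra | rewrite IHl; lra]. Qed.

Lemma prodR_ones {A} (l : list A) : prodR (map (fun _ => 1) l) = 1.
Proof. induction l; simpl; [ring | rewrite IHl; ring]. Qed.

Lemma prodR_pos {A} (l : list A) f :
  (forall x, In x l -> 0 < f x) -> 0 < prodR (map f l).
Proof.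
  induction l; intros H; simpl; [lra|].
  apply Rmult_lt_0_compat; [apply H; left | apply IHl; intros; apply H; right]; auto.
Qed.

Lemma prodR_abs_le1 {A} (l : list A) f :
  (forall x, In x l -> Rabs (f x) <= 1) -> Rabs (prodR (map f l)) <= 1.
Proof.
  induction l; intros H; simpl; [rewrite Rabs_R1; lra|].
  rewrite Rabs_mult. rewrite <- (Rmult_1_r 1).
  apply Rmult_le_compat; try apply Rabs_pos;
    [apply H; left | apply IHl; intros; apply H; right]; auto.
Qed.

(** Telescoping: products of numbers in [[-1,1]] are 1-Lipschitz in each factor. *)
Lemma prodR_diff {A} (l : list A) f g :
  (forall x, In x l -> Rabs (f x) <= 1) -> (forall x, In x l -> Rabs (g x) <= 1) ->
  Rabs (prodR (map f l) - prodR (map g l)) <= sumL l (fun x => Rabs (f x - g x)).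
Proof.
  induction l; intros Hf Hg; simpl.
  - replace (1 - 1) with 0 by lra; rewrite Rabs_R0; lra.
  - replace (f a * prodR (map f l) - g a * prodR (map g l)) with
      ((f a - g a) * prodR (map f l) + g a * (prodR (map f l) - prodR (map g l))) by ring.
    eapply Rle_trans; [apply Rabs_triang|]. rewrite !Rabs_mult.
    apply Rplus_le_compat.
    + rewrite <- (Rmult_1_r (Rabs (f a - g a))) at 2.
      apply Rmult_le_compat_l; [apply Rabs_pos|].
      apply prodR_abs_le1; intros; apply Hf; right; auto.
    + rewrite <- (Rmult_1_l (sumL l _)).
      apply Rmult_le_compat; try apply Rabs_pos; [apply Hg; left; auto|].
      apply IHl; intros; [apply Hf | apply Hg]; right; auto.
Qed.

Lemma sumL_tuples_S {A} (X : list A) p F :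
  sumL (tuples X (S p)) F = sumL X (fun x => sumL (tuples X p) (fun t => F (x :: t))).
Proof. simpl. rewrite sumL_flat_map. apply sumL_ext; intros; apply sumL_map. Qed.

Lemma length_tuples {A} (X : list A) P : length (tuples X P) = (length X ^ P)%nat.
Proof.
  induction P; simpl; auto.
  rewrite flat_map_concat_map, length_concat, map_map.
  erewrite map_ext by (intros; rewrite length_map; reflexivity).
  rewrite IHP. generalize (length X ^ P)%nat as c; intros c; clear IHP.
  induction X; simpl; auto.
Qed.

Lemma In_tuples {A} (X : list A) P E :
  In E (tuples X P) <-> (length E = P /\ forall y, In y E -> In y X).
Proof.
  revert E; induction P; intros E; simpl.
  - split.
    + intros [<- | []]; simpl; split; auto; intros _ [].
    + intros [H _]; destruct E; simpl in *; auto; discriminate.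
  - rewrite in_flat_map. split.
    + intros [x [Hx HE]]. apply in_map_iff in HE. destruct HE as [t [<- Ht]].
      apply IHP in Ht. destruct Ht as [Hl Hin]. simpl; split; [lia|].
      intros y [<- | Hy]; auto.
    + intros [Hl Hin]. destruct E as [|x t]; simpl in Hl; [discriminate|].
      exists x; split; [apply Hin; left; auto|]. apply in_map, IHP; split; [lia|].
      intros; apply Hin; right; auto.
Qed.

Lemma sumL_tuples_perm {A} (X Y : list A) P F :
  Permutation X Y -> sumL (tuples X P) F = sumL (tuples Y P) F.
Proof.
  intros HP. revert F; induction P; intros F; [reflexivity|].
  rewrite !sumL_tuples_S, (sumL_perm X Y) by auto.
  apply sumL_ext; intros; apply IHP.
Qed.

Lemma sumL_tuples_map {A B} (g : A -> B) X P F :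
  sumL (tuples (map g X) P) F = sumL (tuples X P) (fun E => F (map g E)).
Proof.
  revert F; induction P; intros F; [reflexivity|].
  rewrite !sumL_tuples_S, sumL_map. apply sumL_ext; intros x. apply IHP.
Qed.

Lemma sumL_tuples_double {A} (X : list A) P F :
  sumL (tuples (X ++ X) P) F = 2 ^ P * sumL (tuples X P) F.
Proof.
  revert F; induction P; intros F; [simpl; lra|].
  rewrite !sumL_tuples_S, sumL_app.
  rewrite (sumL_ext _ _ (fun x => 2 ^ P * sumL (tuples X P) (fun t => F (x :: t))))
    by (intros; apply IHP).
  rewrite sumL_scal. simpl. lra.
Qed.

Lemma NoDup_map_in {A B} (h : A -> B) l :
  NoDup l -> (forall x y, In x l -> In y l -> h x = h y -> x = y) -> NoDup (map h l).
Proof.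
  induction l; intros Hn Hi; simpl; constructor; inversion Hn; subst.
  - intros Hin. apply in_map_iff in Hin. destruct Hin as [y [Hy Hy']].
    assert (y = a) by (apply Hi; simpl; auto). subst; contradiction.
  - apply IHl; auto. intros; apply Hi; simpl; auto.
Qed.

Lemma In_configs N s : In s (configs N) <-> length s = N.
Proof.
  revert s; induction N; intros s; simpl.
  - split; [intros [<- | []]; auto | intros H; destruct s; [auto | discriminate]].
  - rewrite in_app_iff, !in_map_iff. split.
    + intros [[t [<- Ht]] | [t [<- Ht]]]; apply IHN in Ht; simpl; lia.
    + intros H. destruct s as [|b t]; [discriminate|]. simpl in H.
      destruct b; [left | right]; exists t; split; auto; apply IHN; lia.
Qed.

Lemma NoDup_configs N : NoDup (configs N).
Proof.
  induction N; simpl; [repeat constructor; intros []|].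
  apply NoDup_app; try (apply NoDup_map_in; auto; intros x y _ _ H; inversion H; auto).
  intros x H1 H2. apply in_map_iff in H1, H2.
  destruct H1 as [? [<- _]], H2 as [? [H _]]. discriminate.
Qed.

Lemma length_configs N : length (configs N) = (2 ^ N)%nat.
Proof. induction N; simpl; auto. rewrite length_app, !length_map, IHN. lia. Qed.

Lemma sumL_configs_invol N (h : list bool -> list bool) f :
  (forall s, length s = N -> length (h s) = N /\ h (h s) = s) ->
  sumL (configs N) (fun s => f (h s)) = sumL (configs N) f.
Proof.
  intros Hh. rewrite <- sumL_map. apply sumL_perm, NoDup_Permutation.
  - apply NoDup_map_in; [apply NoDup_configs|]. intros x y Hx Hy Hxy.
    apply In_configs in Hx, Hy. rewrite <- (proj2 (Hh x Hx)), <- (proj2 (Hh y Hy)), Hxy; auto.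
  - apply NoDup_configs.
  - intros x. rewrite in_map_iff, In_configs. split.
    + intros [y [<- Hy]]. apply In_configs in Hy. apply Hh; auto.
    + intros Hx. exists (h x). split; [apply Hh; auto|]. apply In_configs, Hh; auto.
Qed.

Lemma sumL_configs_last N f :
  sumL (configs (S N)) f = sumL (configs N) (fun s => f (s ++ [true]) + f (s ++ [false])).
Proof.
  transitivity (sumL (flat_map (fun s => [s ++ [true]; s ++ [false]]) (configs N)) f).
  - apply sumL_perm, NoDup_Permutation_bis; [apply NoDup_configs| |].
    + rewrite length_configs, flat_map_concat_map, length_concat, map_map.
      replace (2 ^ S N)%nat with (2 * length (configs N))%nat by (rewrite length_configs; simpl; lia).
      generalize (configs N); intros l; induction l; simpl in *; lia.
    + intros x Hx. apply In_configs in Hx. apply in_flat_map.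
      destruct (@exists_last _ x) as [t [b ->]]; [intros ->; discriminate|].
      rewrite length_app in Hx; simpl in Hx.
      exists t. split; [apply In_configs; lia | destruct b; simpl; auto].
  - rewrite sumL_flat_map. apply sumL_ext; intros; simpl; lra.
Qed.

Lemma In_pairs M i j : In (i, j) (pairs M) <-> (i < M /\ j < M)%nat.
Proof. unfold pairs, sites. rewrite in_prod_iff, !in_seq. lia. Qed.

Lemma NoDup_prod {A B} (l : list A) (l' : list B) :
  NoDup l -> NoDup l' -> NoDup (list_prod l l').
Proof.
  intros Hl Hl'. induction l; simpl; [constructor|]. inversion Hl; subst. apply NoDup_app.
  - apply NoDup_map_in; auto. intros x y _ _ Hxy; inversion Hxy; auto.
  - apply IHl; auto.
  - intros x Hx Hx'. apply in_map_iff in Hx. destruct Hx as [t [<- _]].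
    apply in_prod_iff in Hx'. destruct Hx'; contradiction.
Qed.

Lemma NoDup_pairs M : NoDup (pairs M).
Proof. apply NoDup_prod; apply seq_NoDup. Qed.

Lemma length_pairs M : length (pairs M) = (M * M)%nat.
Proof. unfold pairs, sites. rewrite length_prod, length_seq. auto. Qed.

Lemma sumL_weighted_bound {A} (l : list A) f w B :
  (forall x, In x l -> 0 <= w x) -> (forall x, In x l -> Rabs (f x) <= B) ->
  Rabs (sumL l (fun x => f x * w x)) <= B * sumL l w.
Proof.
  induction l; intros Hw Hf; simpl; [rewrite Rabs_R0; lra|].
  eapply Rle_trans; [apply Rabs_triang|]. rewrite Rmult_plus_distr_l, Rabs_mult.
  rewrite (Rabs_right (w a)) by (apply Rle_ge, Hw; left; auto).
  apply Rplus_le_compat.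
  - apply Rmult_le_compat_r; [apply Hw | apply Hf]; left; auto.
  - apply IHl; intros; [apply Hw | apply Hf]; right; auto.
Qed.

Lemma series_eq f l : infinite_sum f l -> series f = l.
Proof.
  intros H. unfold series.
  eapply uniqueness_sum; [|exact H].
  apply (epsilon_spec (inhabits 0) (fun l => infinite_sum f l)). exists l; exact H.
Qed.

Lemma Un_cv_const c : Un_cv (fun _ => c) c.
Proof. intros e He. exists 0%nat. intros. unfold Rdist. rewrite Rminus_diag, Rabs_R0; lra. Qed.

Lemma infinite_sum_ext a b L : (forall n, a n = b n) -> infinite_sum a L -> infinite_sum b L.
Proof.
  intros H Ha e He. destruct (Ha e He) as [N HN]. exists N. intros n Hn.
  rewrite <- (sum_eq a b) by auto. auto.
Qed.

Lemma infinite_sum_plus a b La Lb :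
  infinite_sum a La -> infinite_sum b Lb -> infinite_sum (fun n => a n + b n) (La + Lb).
Proof.
  intros Ha Hb e He. destruct (CV_plus _ _ _ _ Ha Hb e He) as [N HN]. exists N. intros n Hn.
  rewrite plus_sum. apply HN; auto.
Qed.

Lemma infinite_sum_scal a La c :
  infinite_sum a La -> infinite_sum (fun n => c * a n) (c * La).
Proof.
  intros Ha e He. destruct (CV_mult _ _ _ _ (Un_cv_const c) Ha e He) as [N HN]. exists N.
  intros n Hn. replace (sum_f_R0 (fun k => c * a k) n) with (c * sum_f_R0 a n).
  - apply HN; auto.
  - rewrite scal_sum; apply sum_eq; intros; ring.
Qed.

Definition expt (u : R) (i : nat) : R := u ^ i / INR (fact i).

Lemma exp_sum u : infinite_sum (expt u) (exp u).
Proof.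
  unfold exp. destruct (exist_exp u) as [l Hl]. simpl.
  eapply infinite_sum_ext; [|apply Hl]. intros; unfold expt; simpl; unfold Rdiv; lra.
Qed.

Lemma expt_nonneg u i : 0 <= u -> 0 <= expt u i.
Proof.
  intros; unfold expt. apply Rmult_le_pos; [apply pow_le; auto|].
  left; apply Rinv_0_lt_compat, INR_fact_lt_0.
Qed.

Lemma infinite_sum_sumL {A} (l : list A) (a : A -> nat -> R) (La : A -> R) :
  (forall x, In x l -> infinite_sum (a x) (La x)) ->
  infinite_sum (fun n => sumL l (fun x => a x n)) (sumL l La).
Proof.
  induction l; intros H; simpl.
  - rewrite <- (Rmult_0_l (exp 0)).
    eapply infinite_sum_ext; [|apply (infinite_sum_scal _ _ 0 (exp_sum 0))].
    simpl; intros; ring.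
  - apply infinite_sum_plus; [apply H; left | apply IHl; intros; apply H; right]; auto.
Qed.

Lemma dom_cv (a b : nat -> R) Lb :
  (forall j, Rabs (a j) <= b j) -> infinite_sum b Lb -> exists L, infinite_sum a L.
Proof.
  intros H Hb.
  assert (Hc : Cauchy_crit_series (fun i => Rabs (a i))).
  { apply cv_cauchy_1, (Rseries_CV_comp (fun i => Rabs (a i)) b).
    - intros; split; [apply Rabs_pos | auto].
    - exists Lb; apply Hb. }
  apply cauchy_abs, cv_cauchy_2 in Hc. destruct Hc as [L HL]. exists L; apply HL.
Qed.

Lemma sum_bound (a b : nat -> R) L Lb :
  (forall j, Rabs (a j) <= b j) -> infinite_sum a L -> infinite_sum b Lb -> Rabs L <= Lb.
Proof. intros H Ha Hb. exact (sum_cv_maj b (fun k _ => a k) 0 L Lb Ha Hb H). Qed.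

Lemma tail_bound (a b : nat -> R) L Lb M :
  (forall j, Rabs (a j) <= b j) -> infinite_sum a L -> infinite_sum b Lb ->
  Rabs (L - sum_f_R0 a M) <= Lb - sum_f_R0 b M.
Proof. intros H Ha Hb. exact (sum_maj1 (fun k _ => a k) b 0 L Lb M Ha Hb H). Qed.

Lemma poisson_sum lam : infinite_sum (poisson lam) 1.
Proof.
  replace 1 with (exp (- lam) * exp lam) by (rewrite <- exp_plus, Rplus_opp_l; apply exp_0).
  eapply infinite_sum_ext; [|apply (infinite_sum_scal _ _ _ (exp_sum lam))].
  intros; unfold poisson, expt, Rdiv; lra.
Qed.

Lemma poisson_nonneg lam k : 0 <= lam -> 0 <= poisson lam k.
Proof.
  intros H. replace (poisson lam k) with (exp (- lam) * expt lam k)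
    by (unfold poisson, expt, Rdiv; ring).
  apply Rmult_le_pos; [left; apply exp_pos | apply expt_nonneg; auto].
Qed.

Lemma Rdiv_nonneg x y : 0 <= x -> 0 < y -> 0 <= x / y.
Proof. intros; apply Rmult_le_pos; [|left; apply Rinv_0_lt_compat]; auto. Qed.

Lemma Un_cv_harmonic_bound (u : nat -> R) c :
  (forall N, Rabs (u N) <= c / INR (S N)) -> Un_cv u 0.
Proof.
  intros H e He.
  assert (Hc : 0 <= c) by (specialize (H 0%nat); simpl in H; pose proof (Rabs_pos (u 0%nat)); lra).
  destruct (archimed_cor1 (e / (c + 1))) as [K [HK HK0]]; [apply Rdiv_lt_0_compat; lra|].
  exists K. intros n Hn. unfold Rdist. rewrite Rminus_0_r.
  eapply Rle_lt_trans; [apply H|].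
  assert (HKn : INR K <= INR (S n)) by (apply le_INR; lia).
  assert (HK' : 0 < INR K) by (apply lt_0_INR; lia).
  assert (/ INR (S n) <= / INR K) by (apply Rinv_le_contravar; auto).
  assert (0 < / INR (S n)) by (apply Rinv_0_lt_compat; lra).
  assert (e / (c + 1) * (c + 1) = e) by (field; lra).
  unfold Rdiv in *. nra.
Qed.

Lemma dominated_series (a b : nat -> R) Lb :
  (forall j, Rabs (a j) <= b j) -> infinite_sum b Lb ->
  infinite_sum a (series a) /\ Rabs (series a) <= Lb.
Proof.
  intros H Hb. destruct (dom_cv a b Lb H Hb) as [L HL].
  rewrite (series_eq _ _ HL). split; [exact HL | exact (sum_bound a b L Lb H HL Hb)].
Qed.

Lemma partial_sum_le (p : nat -> R) S N :
  (forall i, 0 <= p i) -> infinite_sum p S -> sum_f_R0 p N <= S.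
Proof. intros Hp HS. apply sum_incr; auto. Qed.

Lemma partial_sum_from (p : nat -> R) M N : (M <= N)%nat ->
  sum_f_R0 (fun i => if Nat.leb i M then 0 else p i) N = sum_f_R0 p N - sum_f_R0 p M.
Proof.
  intros H. induction H.
  - rewrite sum_eq_R0; [lra|]. intros i Hi. apply Nat.leb_le in Hi. rewrite Hi; auto.
  - simpl. rewrite IHle. assert (E : Nat.leb (S m) M = false) by (apply Nat.leb_gt; lia).
    simpl in E |- *. rewrite E. lra.
Qed.

Lemma small_fraction x e : 0 <= x -> 0 < e -> x * (e / (2 * (x + 1))) < e / 2.
Proof.
  intros Hx He. replace (x * (e / (2 * (x + 1)))) with ((e / 2) * (x / (x + 1))) by (field; lra).
  assert (x / (x + 1) < 1) by (apply Rmult_lt_reg_r with (x + 1); [lra|]; field_simplify; lra).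
  assert (0 < e / 2) by lra. nra.
Qed.

Lemma convolution_null (p q : nat -> R) S Q :
  (forall i, 0 <= p i) -> infinite_sum p S ->
  (forall M, 0 <= q M <= Q) -> Un_cv q 0 ->
  Un_cv (fun N => sum_f_R0 (fun i => p i * q (N - i)%nat) N) 0.
Proof.
  intros Hp HS Hq Hq0 e He.
  assert (HS0 : 0 <= S) by (eapply Rle_trans; [apply (Hp 0%nat) | apply (partial_sum_le p S 0); auto]).
  assert (HQ : 0 <= Q) by (destruct (Hq 0%nat); lra).
  set (e1 := e / (2 * (S + 1))). set (e2 := e / (2 * (Q + 1))).
  assert (He1 : 0 < e1) by (unfold e1; apply Rdiv_lt_0_compat; lra).
  assert (He2 : 0 < e2) by (unfold e2; apply Rdiv_lt_0_compat; lra).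
  destruct (Hq0 e1 He1) as [M1 HM1]. destruct (HS e2 He2) as [M2 HM2].
  exists (M1 + M2)%nat. intros N HN.
  (* small [q] on the head of the sum, small tail of [p] on the rest *)
  assert (Hterm : forall i, (i <= N)%nat ->
            p i * q (N - i)%nat <= p i * e1 + Q * (if Nat.leb i M2 then 0 else p i)).
  { intros i Hi. pose proof (Hp i). destruct (Hq (N - i)%nat).
    destruct (Nat.leb i M2) eqn:E; [|nra].
    apply Nat.leb_le in E. specialize (HM1 (N - i)%nat ltac:(lia)).
    unfold Rdist in HM1. rewrite Rminus_0_r, Rabs_right in HM1 by lra. nra. }
  assert (Htail : S - sum_f_R0 p M2 < e2).
  { specialize (HM2 M2 ltac:(lia)). unfold Rdist in HM2.
    pose proof (partial_sum_le p S M2 Hp HS). rewrite Rabs_left1 in HM2; lra. }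
  assert (HN0 : 0 <= sum_f_R0 (fun i => p i * q (N - i)%nat) N).
  { apply cond_pos_sum. intros; apply Rmult_le_pos; [apply Hp | apply Hq]. }
  unfold Rdist. rewrite Rminus_0_r, Rabs_right by lra.
  eapply Rle_lt_trans; [apply sum_Rle; intros i Hi; apply Hterm; auto|].
  rewrite plus_sum, <- scal_sum.
  rewrite (sum_eq (fun i => Q * (if Nat.leb i M2 then 0 else p i))
                  (fun i => (if Nat.leb i M2 then 0 else p i) * Q)) by (intros; ring).
  rewrite <- scal_sum, partial_sum_from by lia.
  pose proof (partial_sum_le p S N Hp HS). pose proof (partial_sum_le p S M2 Hp HS).
  assert (S * e1 < e / 2) by (apply small_fraction; auto).
  assert (Q * e2 < e / 2) by (apply small_fraction; auto).
  assert (sum_f_R0 p N * e1 <= S * e1) by (apply Rmult_le_compat_r; lra).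
  assert (Q * (sum_f_R0 p N - sum_f_R0 p M2) <= Q * e2) by (apply Rmult_le_compat_l; lra).
  lra.
Qed.

Lemma diag_reindex (a : nat -> nat -> R) N :
  sum_f_R0 (fun n => sum_f_R0 (fun i => a i (n - i)%nat) n) N =
  sum_f_R0 (fun i => sum_f_R0 (fun j => a i j) (N - i)%nat) N.
Proof.
  induction N; [reflexivity|].
  rewrite tech5, IHN, (tech5 (fun i => sum_f_R0 (fun j => a i j) (S N - i)%nat) N),
    (tech5 (fun i => a i (S N - i)%nat) N), Nat.sub_diag.
  rewrite (sum_eq (fun i => sum_f_R0 (fun j => a i j) (S N - i)%nat)
                  (fun i => sum_f_R0 (fun j => a i j) (N - i)%nat + a i (S N - i)%nat)).
  - rewrite plus_sum. simpl. lra.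
  - intros i Hi. replace (S N - i)%nat with (S (N - i)) by lia. reflexivity.
Qed.

Definition exp_tail (v : R) (M : nat) : R := exp v - sum_f_R0 (expt v) M.

Lemma exp_tail_bounds v M : 0 <= v -> 0 <= exp_tail v M <= exp v.
Proof.
  intros Hv. unfold exp_tail.
  pose proof (partial_sum_le (expt v) (exp v) M (fun i => expt_nonneg v i Hv) (exp_sum v)).
  assert (0 <= sum_f_R0 (expt v) M) by (apply cond_pos_sum; intros; apply expt_nonneg; auto).
  lra.
Qed.

Lemma exp_tail_null v : Un_cv (exp_tail v) 0.
Proof.
  intros e He. destruct (exp_sum v e He) as [N HN]. exists N. intros n Hn.
  specialize (HN n Hn). unfold Rdist, exp_tail in *. rewrite Rminus_0_r, Rabs_minus_sym. auto.
Qed.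

Section DiagonalSummation.
Variables (a : nat -> nat -> R) (c u v : R).
Hypotheses (Hc : 0 <= c) (Hu : 0 <= u) (Hv : 0 <= v).
Hypothesis Hdom : forall i j, Rabs (a i j) <= c * expt u i * expt v j.

Let diagonal_sum (N : nat) : R := sum_f_R0 (fun n => sum_f_R0 (fun i => a i (n - i)%nat) n) N.

Lemma row_dominant i : infinite_sum (fun j => c * expt u i * expt v j) (c * expt u i * exp v).
Proof. apply infinite_sum_scal, exp_sum. Qed.

Lemma row_series i : infinite_sum (a i) (series (a i)) /\ Rabs (series (a i)) <= c * expt u i * exp v.
Proof. apply (dominated_series _ _ _ (Hdom i) (row_dominant i)). Qed.

Lemma row_tail_bound i M :
  Rabs (series (a i) - sum_f_R0 (a i) M) <= c * (expt u i * exp_tail v M).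
Proof.
  pose proof (tail_bound (a i) _ _ _ M (Hdom i) (proj1 (row_series i)) (row_dominant i)) as T.
  replace (sum_f_R0 (fun j => c * expt u i * expt v j) M) with (c * expt u i * sum_f_R0 (expt v) M) in T
    by (rewrite scal_sum; apply sum_eq; intros; ring).
  unfold exp_tail. replace (c * (expt u i * (exp v - sum_f_R0 (expt v) M)))
    with (c * expt u i * exp v - c * expt u i * sum_f_R0 (expt v) M) by ring. exact T.
Qed.

Lemma rows_minus_diagonal_null :
  Un_cv (fun N => sum_f_R0 (fun i => series (a i)) N - diagonal_sum N) 0.
Proof.
  pose proof (convolution_null (expt u) (exp_tail v) (exp u) (exp v) (fun i => expt_nonneg u i Hu)
                (exp_sum u) (fun M => exp_tail_bounds v M Hv) (exp_tail_null v)) as Hcv.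
  intros e He. destruct (Hcv (e / (c + 1))) as [N HN]; [apply Rdiv_lt_0_compat; lra|].
  exists N. intros n Hn. specialize (HN n Hn). unfold Rdist in *. rewrite Rminus_0_r in *.
  unfold diagonal_sum. rewrite diag_reindex, <- minus_sum.
  assert (Hle : Rabs (sum_f_R0 (fun i => series (a i) - sum_f_R0 (fun j => a i j) (n - i)%nat) n)
                <= c * sum_f_R0 (fun i => expt u i * exp_tail v (n - i)%nat) n).
  { eapply Rle_trans; [apply Rsum_abs|]. rewrite scal_sum.
    apply sum_Rle. intros i _. rewrite Rmult_comm. apply row_tail_bound. }
  assert (H0 : 0 <= sum_f_R0 (fun i => expt u i * exp_tail v (n - i)%nat) n).
  { apply cond_pos_sum; intros; apply Rmult_le_pos; [apply expt_nonneg | apply exp_tail_bounds]; auto. }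
  rewrite Rabs_right in HN by lra.
  eapply Rle_lt_trans; [apply Hle|].
  apply Rle_lt_trans with ((c + 1) * sum_f_R0 (fun i => expt u i * exp_tail v (n - i)%nat) n); [nra|].
  apply Rmult_lt_reg_l with (/ (c + 1)); [apply Rinv_0_lt_compat; lra|].
  rewrite <- Rmult_assoc, Rinv_l by lra. unfold Rdiv in HN. lra.
Qed.

Lemma diagonal_series :
  infinite_sum (fun i => series (a i)) (series (fun n => sum_f_R0 (fun i => a i (n - i)%nat) n)).
Proof.
  assert (Hg : forall i, Rabs (series (a i)) <= c * exp v * expt u i)
    by (intros i; replace (c * exp v * expt u i) with (c * expt u i * exp v) by ring; apply row_series).
  destruct (dom_cv _ _ _ Hg (infinite_sum_scal _ _ (c * exp v) (exp_sum u))) as [L HL].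
  assert (Hdg : infinite_sum (fun n => sum_f_R0 (fun i => a i (n - i)%nat) n) L).
  { intros e He. destruct (CV_minus _ _ _ _ HL rows_minus_diagonal_null e He) as [N HN].
    exists N. intros n Hn. specialize (HN n Hn). unfold diagonal_sum in HN.
    rewrite Rminus_0_r in HN.
    replace (sum_f_R0 (fun i => series (a i)) n - (sum_f_R0 (fun i => series (a i)) n
               - sum_f_R0 (fun k => sum_f_R0 (fun i => a i (k - i)%nat) k) n))
      with (sum_f_R0 (fun k => sum_f_R0 (fun i => a i (k - i)%nat) k) n) in HN by ring.
    exact HN. }
  rewrite (series_eq _ _ Hdg). exact HL.
Qed.
End DiagonalSummation.

(** Binomial coefficients given by Pascal's rule, so that the rule is
    definitional; [binom_C] identifies them with the factorial formula. *)
Fixpoint binom (n k : nat) : R :=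
  match n, k with
  | _, O => 1
  | O, S _ => 0
  | S n', S k' => binom n' k' + binom n' (S k')
  end.

Lemma binom_gt n k : (n < k)%nat -> binom n k = 0.
Proof.
  revert k; induction n; intros k H; destruct k; try lia; simpl; auto.
  rewrite !IHn by lia. lra.
Qed.

Lemma C_diag n : C n n = 1.
Proof. unfold C. rewrite Nat.sub_diag. simpl. field. apply INR_fact_neq_0. Qed.

Lemma binom_C n k : (k <= n)%nat -> binom n k = C n k.
Proof.
  revert k; induction n; intros k Hk.
  - replace k with 0%nat by lia. symmetry; apply C_diag.
  - destruct k as [|k]; simpl binom.
    + unfold C. rewrite Nat.sub_0_r. simpl (fact 0). simpl (INR 1). field. apply INR_fact_neq_0.
    + destruct (Nat.eq_dec k n) as [-> | Hne].
      * rewrite (binom_gt n (S n)), IHn, !C_diag by lia. lra.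
      * rewrite !IHn by lia. apply pascal. lia.
Qed.

Lemma pascal_sum (U : nat -> R) P :
  sum_f_R0 (fun k => binom P k * (U (S k) + U k)) P = sum_f_R0 (fun k => binom (S P) k * U k) (S P).
Proof.
  rewrite (decomp_sum (fun k => binom (S P) k * U k) (S P)) by lia. simpl pred.
  rewrite (sum_eq (fun i => binom (S P) (S i) * U (S i))
                  (fun i => binom P i * U (S i) + binom P (S i) * U (S i))) by (intros; simpl; ring).
  rewrite plus_sum.
  assert (E : sum_f_R0 (fun k => binom P k * U k) P
              = U 0%nat + sum_f_R0 (fun i => binom P (S i) * U (S i)) P).
  { transitivity (sum_f_R0 (fun k => binom P k * U k) (S P)).
    - rewrite tech5, (binom_gt P (S P)) by lia. ring.
    - rewrite decomp_sum by lia. simpl pred. destruct P; simpl binom; ring. }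
  rewrite (sum_eq (fun k => binom P k * (U (S k) + U k))
                  (fun k => binom P k * U (S k) + binom P k * U k)) by (intros; ring).
  rewrite plus_sum, E. simpl binom. ring.
Qed.

(** Splitting the [P]-fold draws from [X] according to a predicate [p]:
    a draw with [k] points in [p] and [P - k] outside arises [binom P k] times. *)
Section SplitDraws.
Context {A : Type} (X : list A) (p : A -> bool).

Definition split_sum (k l : nat) (Phi : list A -> list A -> R) : R :=
  sumL (tuples (filter p X) k)
       (fun E1 => sumL (tuples (filter (fun x => negb (p x)) X) l) (fun E2 => Phi E1 E2)).

Lemma sum_tuples_split P : forall Phi,
  sumL (tuples X P) (fun E => Phi (filter p E) (filter (fun x => negb (p x)) E)) =
  sum_f_R0 (fun k => binom P k * split_sum k (P - k) Phi) P.
Proof.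
  induction P; intros Phi.
  - unfold split_sum; simpl; ring.
  - rewrite sumL_tuples_S.
    set (Phx := fun x E1 E2 => if p x then Phi (x :: E1) E2 else Phi E1 (x :: E2)).
    rewrite (sumL_ext _ _ (fun x => sum_f_R0 (fun k => binom P k * split_sum k (P - k) (Phx x)) P)).
    2:{ intros x. rewrite <- IHP. apply sumL_ext; intros t. unfold Phx; simpl. destruct (p x); reflexivity. }
    rewrite sumL_sum_f.
    (* the first draw is either inside or outside [p] *)
    rewrite (sum_eq _ (fun k => binom P k * (split_sum (S k) (P - k) Phi + split_sum k (S (P - k)) Phi))).
    2:{ intros k Hk. rewrite sumL_scal. f_equal. rewrite (sumL_filter X p). unfold split_sum. f_equal.
        - rewrite sumL_tuples_S. apply sumL_ext_in. intros x Hx.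
          apply filter_In in Hx. unfold Phx. rewrite (proj2 Hx). reflexivity.
        - rewrite (sumL_ext_in _ _ (fun x => sumL (tuples (filter p X) k)
              (fun E1 => sumL (tuples (filter (fun x => negb (p x)) X) (P - k)) (fun E2 => Phi E1 (x :: E2))))).
          + rewrite sumL_swap. apply sumL_ext; intros E1. rewrite sumL_tuples_S. reflexivity.
          + intros x Hx. apply filter_In in Hx. unfold Phx.
            destruct (p x); [destruct Hx; discriminate | reflexivity]. }
    rewrite (sum_eq _ (fun k => binom P k * ((fun k => split_sum k (S P - k) Phi) (S k)
                                            + (fun k => split_sum k (S P - k) Phi) k))).
    + apply (pascal_sum (fun k => split_sum k (S P - k) Phi)).
    + intros k Hk. replace (S P - S k)%nat with (P - k)%nat by lia.
      replace (S P - k)%nat with (S (P - k)) by lia. reflexivity.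
Qed.

Lemma split_sum_bound k l Phi B :
  (forall E1 E2, Rabs (Phi E1 E2) <= B) ->
  Rabs (split_sum k l Phi)
  <= INR (length (filter p X)) ^ k * (INR (length (filter (fun x => negb (p x)) X)) ^ l * B).
Proof.
  intros H. unfold split_sum. rewrite <- !pow_INR, <- !length_tuples.
  apply sumL_abs_le. intros E1 _. apply sumL_abs_le. intros; auto.
Qed.
End SplitDraws.

Lemma length_filter_split {A} (X : list A) p :
  length X = (length (filter p X) + length (filter (fun x => negb (p x)) X))%nat.
Proof. induction X; simpl; auto. destruct (p a); simpl; lia. Qed.

(** [poisson_avg lam X F] is the expectation of [F E], where [E] consists of a
    Poisson([lam]) number of independent uniform draws from [X]. *)
Definition poisson_avg {A} (lam : R) (X : list A) (F : list A -> R) : R :=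
  series (fun P => poisson lam P * avg_list (tuples X P) F).

Lemma avg_tuples {A} (X : list A) P F :
  avg_list (tuples X P) F = sumL (tuples X P) F / INR (length X) ^ P.
Proof. unfold avg_list. rewrite length_tuples, pow_INR. reflexivity. Qed.

Lemma avg_bound {A} (l : list A) f B :
  0 <= B -> (forall x, In x l -> Rabs (f x) <= B) -> Rabs (avg_list l f) <= B.
Proof.
  intros HB H. unfold avg_list. destruct l as [|y l'].
  - simpl. unfold Rdiv. rewrite Rmult_0_l, Rabs_R0. auto.
  - assert (Hl : 0 < INR (length (y :: l'))) by (apply lt_0_INR; simpl; lia).
    unfold Rdiv. rewrite Rabs_mult, Rabs_inv, (Rabs_right (INR _)) by lra.
    apply Rmult_le_reg_r with (INR (length (y :: l'))); auto.
    rewrite Rmult_assoc, Rinv_l, Rmult_1_r, Rmult_comm by lra. apply sumL_abs_le; auto.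
Qed.

Lemma poisson_avg_spec {A} lam (X : list A) F B :
  0 <= lam -> (forall E, Rabs (F E) <= B) ->
  infinite_sum (fun P => poisson lam P * avg_list (tuples X P) F) (poisson_avg lam X F)
  /\ Rabs (poisson_avg lam X F) <= B.
Proof.
  intros Hl HF. assert (HB : 0 <= B) by (eapply Rle_trans; [apply Rabs_pos | apply (HF [])]).
  assert (Hdom : forall P, Rabs (poisson lam P * avg_list (tuples X P) F) <= B * poisson lam P).
  { intros P. rewrite Rabs_mult, Rabs_right, Rmult_comm by (apply Rle_ge, poisson_nonneg; auto).
    apply Rmult_le_compat_r; [apply poisson_nonneg; auto | apply avg_bound; auto]. }
  pose proof (dominated_series _ _ _ Hdom (infinite_sum_scal _ _ B (poisson_sum lam))) as H.
  rewrite Rmult_1_r in H. exact H.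
Qed.

Lemma poisson_avg_ext {A} lam (X : list A) F G :
  (forall P E, In E (tuples X P) -> F E = G E) -> poisson_avg lam X F = poisson_avg lam X G.
Proof.
  intros H. unfold poisson_avg. f_equal. apply functional_extensionality. intros P. f_equal.
  unfold avg_list. f_equal. apply sumL_ext_in. intros; apply H with P; auto.
Qed.

Lemma poisson_avg_const {A} lam (X : list A) c : X <> [] -> poisson_avg lam X (fun _ => c) = c.
Proof.
  intros HX. unfold poisson_avg. apply series_eq.
  rewrite <- (Rmult_1_r c).
  eapply infinite_sum_ext; [|exact (infinite_sum_scal _ _ c (poisson_sum lam))].
  intros P. unfold avg_list. rewrite sumL_const.
  assert (INR (length (tuples X P)) <> 0).
  { rewrite length_tuples. apply not_0_INR, Nat.pow_nonzero. destruct X; [congruence | simpl; lia]. }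
  field; auto.
Qed.

Lemma poisson_avg_map {A B} lam (X : list A) (Y : list B) (g : A -> B) F :
  Permutation (map g X) Y -> poisson_avg lam X (fun E => F (map g E)) = poisson_avg lam Y F.
Proof.
  intros HP. unfold poisson_avg. f_equal. apply functional_extensionality. intros P. f_equal.
  rewrite !avg_tuples, <- sumL_tuples_map, (sumL_tuples_perm _ _ _ _ HP).
  rewrite <- (Permutation_length HP), length_map. reflexivity.
Qed.

Lemma poisson_avg_perm {A} lam (X Y : list A) F :
  Permutation X Y -> poisson_avg lam X F = poisson_avg lam Y F.
Proof.
  intros HP. rewrite <- (poisson_avg_map lam X Y (fun x => x) F) by (rewrite map_id; auto).
  apply poisson_avg_ext. intros; rewrite map_id; reflexivity.
Qed.

Lemma poisson_avg_double {A} lam (Y : list A) F :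
  Y <> [] -> poisson_avg lam (Y ++ Y) F = poisson_avg lam Y F.
Proof.
  intros HY. unfold poisson_avg. f_equal. apply functional_extensionality. intros P. f_equal.
  rewrite !avg_tuples, sumL_tuples_double, length_app, plus_INR, Rplus_diag, Rpow_mult_distr.
  assert (0 < INR (length Y)) by (apply lt_0_INR; destruct Y; [congruence | simpl; lia]).
  field. split; apply pow_nonzero; lra.
Qed.

Lemma poisson_avg_sum {A} lam (X : list A) (J : list nat) c (F : nat -> list A -> R) B :
  0 <= lam -> (forall j E, Rabs (F j E) <= B) ->
  poisson_avg lam X (fun E => sumL J (fun j => c * F j E))
  = sumL J (fun j => c * poisson_avg lam X (F j)).
Proof.
  intros Hl HB. unfold poisson_avg at 1. apply series_eq.
  eapply infinite_sum_ext;
    [|apply (infinite_sum_sumL J (fun j P => c * (poisson lam P * avg_list (tuples X P) (F j))))].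
  - intros P. unfold avg_list, Rdiv. rewrite sumL_swap, <- sumL_scal_r, <- sumL_scal.
    apply sumL_ext; intros j. rewrite sumL_scal. ring.
  - intros j _. apply infinite_sum_scal, (poisson_avg_spec lam X (F j) B Hl). auto.
Qed.

Lemma poisson_avg_diff_bound {A} lam (X : list A) F1 F2 B d :
  0 <= lam -> (forall E, Rabs (F1 E) <= B) -> (forall E, Rabs (F2 E) <= B) ->
  (forall E, Rabs (F1 E - F2 E) <= d) ->
  Rabs (poisson_avg lam X F1 - poisson_avg lam X F2) <= d.
Proof.
  intros Hl H1 H2 Hd.
  destruct (poisson_avg_spec lam X F1 B Hl H1) as [S1 _].
  destruct (poisson_avg_spec lam X F2 B Hl H2) as [S2 _].
  pose proof (infinite_sum_plus _ _ _ _ S1 (infinite_sum_scal _ _ (-1) S2)) as S.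
  assert (Hdd : 0 <= d) by (eapply Rle_trans; [apply Rabs_pos | apply (Hd [])]).
  replace (poisson_avg lam X F1 - poisson_avg lam X F2)
    with (poisson_avg lam X F1 + -1 * poisson_avg lam X F2) by ring.
  rewrite <- (Rmult_1_r d).
  apply (sum_bound (fun P => poisson lam P * avg_list (tuples X P) F1
                             + -1 * (poisson lam P * avg_list (tuples X P) F2))
                   (fun P => d * poisson lam P)); [|exact S | apply infinite_sum_scal, poisson_sum].
  intros P.
  replace (poisson lam P * avg_list (tuples X P) F1 + -1 * (poisson lam P * avg_list (tuples X P) F2))
    with (poisson lam P * avg_list (tuples X P) (fun E => F1 E - F2 E))
    by (unfold avg_list; rewrite sumL_minus; unfold Rdiv; ring).
  rewrite Rabs_mult, Rabs_right, Rmult_comm by (apply Rle_ge, poisson_nonneg; auto).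
  apply Rmult_le_compat_r; [apply poisson_nonneg; auto | apply avg_bound; auto].
Qed.

Lemma pow_div_l x y k : y <> 0 -> (x / y) ^ k = x ^ k / y ^ k.
Proof.
  intros H. induction k; simpl; [field | rewrite IHk; field; split; auto; apply pow_nonzero; auto].
Qed.

Section Thinning.
Context {A : Type} (X : list A) (p : A -> bool) (lam B : R) (Phi : list A -> list A -> R).
Hypothesis Hlam : 0 <= lam.
Hypothesis HPhi : forall E1 E2, Rabs (Phi E1 E2) <= B.
Let X1 := filter p X.
Let X2 := filter (fun x => negb (p x)) X.
Hypothesis Hn1 : (0 < length X1)%nat.
Hypothesis Hn2 : (0 < length X2)%nat.
Let n1 := INR (length X1).
Let n2 := INR (length X2).
Let n := INR (length X).
Let w := lam / n.

Lemma thin_sizes_split : n = n1 + n2.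
Proof. unfold n, n1, n2. rewrite (length_filter_split X p), plus_INR. reflexivity. Qed.

Lemma thin_inside_pos : 0 < n1.  Proof. apply lt_0_INR; auto. Qed.
Lemma thin_outside_pos : 0 < n2.  Proof. apply lt_0_INR; auto. Qed.

Definition thin_term (k l : nat) : R :=
  exp (- lam) * expt w k * expt w l * split_sum X p k l Phi.

Lemma thin_term_diagonal P :
  poisson lam P * avg_list (tuples X P) (fun E => Phi (filter p E) (filter (fun x => negb (p x)) E))
  = sum_f_R0 (fun k => thin_term k (P - k)) P.
Proof.
  pose proof thin_sizes_split. pose proof thin_inside_pos. pose proof thin_outside_pos.
  rewrite avg_tuples, sum_tuples_split. fold n.
  replace (poisson lam P * (sum_f_R0 (fun k => binom P k * split_sum X p k (P - k) Phi) P / n ^ P))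
    with (poisson lam P / n ^ P * sum_f_R0 (fun k => binom P k * split_sum X p k (P - k) Phi) P)
    by (unfold Rdiv; ring).
  rewrite scal_sum. apply sum_eq. intros k Hk.
  unfold thin_term, poisson, expt, w. rewrite binom_C by auto. unfold C.
  rewrite !pow_div_l by lra.
  replace (lam ^ P) with (lam ^ k * lam ^ (P - k)) by (rewrite <- pow_add; f_equal; lia).
  replace (n ^ P) with (n ^ k * n ^ (P - k)) by (rewrite <- pow_add; f_equal; lia).
  field. repeat split; try apply INR_fact_neq_0; apply pow_nonzero; lra.
Qed.

Lemma thin_term_bound i j :
  Rabs (thin_term i j) <= (exp (- lam) * B) * expt (w * n1) i * expt (w * n2) j.
Proof.
  pose proof thin_inside_pos. pose proof thin_outside_pos.
  assert (Hw : 0 <= w) by (unfold w; apply Rdiv_nonneg; [|rewrite thin_sizes_split]; lra).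
  assert (Hc : 0 <= exp (- lam) * expt w i * expt w j).
  { apply Rmult_le_pos; [apply Rmult_le_pos; [left; apply exp_pos|]|]; apply expt_nonneg; auto. }
  unfold thin_term. rewrite Rabs_mult, (Rabs_right _ (Rle_ge _ _ Hc)).
  eapply Rle_trans; [apply Rmult_le_compat_l; [exact Hc | apply split_sum_bound; eauto]|].
  fold X1 X2 n1 n2. unfold expt. rewrite !Rpow_mult_distr. right. field.
  split; apply INR_fact_neq_0.
Qed.

Lemma thin_row k :
  infinite_sum (thin_term k)
    (poisson (lam * n1 / n) k * avg_list (tuples X1 k)
       (fun E1 => poisson_avg (lam * n2 / n) X2 (fun E2 => Phi E1 E2))).
Proof.
  pose proof thin_sizes_split. pose proof thin_inside_pos. pose proof thin_outside_pos.
  set (lam1 := lam * n1 / n). set (lam2 := lam * n2 / n).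
  assert (Hl2 : 0 <= lam2) by (unfold lam2; apply Rdiv_nonneg; nra).
  assert (Hin : forall E1, In E1 (tuples X1 k) ->
            infinite_sum (fun l => poisson lam2 l * avg_list (tuples X2 l) (fun E2 => Phi E1 E2))
                         (poisson_avg lam2 X2 (fun E2 => Phi E1 E2)))
    by (intros E1 _; apply (poisson_avg_spec lam2 X2 _ B Hl2); auto).
  pose proof (infinite_sum_scal _ _ (poisson lam1 k / n1 ^ k) (infinite_sum_sumL _ _ _ Hin)) as Hs.
  rewrite avg_tuples. fold n1.
  replace (poisson lam1 k * (sumL (tuples X1 k) (fun E1 => poisson_avg lam2 X2 (fun E2 => Phi E1 E2)) / n1 ^ k))
    with (poisson lam1 k / n1 ^ k * sumL (tuples X1 k) (fun E1 => poisson_avg lam2 X2 (fun E2 => Phi E1 E2)))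
    by (unfold Rdiv; ring).
  eapply infinite_sum_ext; [|exact Hs]. intros l. simpl.
  rewrite (sumL_ext _ _ (fun E1 => (poisson lam2 l / n2 ^ l) * sumL (tuples X2 l) (fun E2 => Phi E1 E2)))
    by (intros E1; rewrite avg_tuples; fold n2; unfold Rdiv; ring).
  rewrite sumL_scal. unfold thin_term, split_sum. fold X1 X2.
  unfold poisson, expt, lam1, lam2, w.
  replace (exp (- lam)) with (exp (- (lam * n1 / n)) * exp (- (lam * n2 / n)))
    by (rewrite <- exp_plus; f_equal; rewrite H; field; lra).
  rewrite !pow_div_l by lra. rewrite !Rpow_mult_distr.
  field. repeat split; try apply INR_fact_neq_0; apply pow_nonzero; lra.
Qed.

Theorem poisson_thinning :
  poisson_avg lam X (fun E => Phi (filter p E) (filter (fun x => negb (p x)) E)) =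
  poisson_avg (lam * n1 / n) X1 (fun E1 => poisson_avg (lam * n2 / n) X2 (fun E2 => Phi E1 E2)).
Proof.
  pose proof thin_sizes_split. pose proof thin_inside_pos. pose proof thin_outside_pos.
  assert (HB : 0 <= B) by (eapply Rle_trans; [apply Rabs_pos | apply (HPhi [] [])]).
  assert (Hw : 0 <= w) by (unfold w; apply Rdiv_nonneg; lra).
  pose proof (diagonal_series thin_term (exp (- lam) * B) (w * n1) (w * n2)) as Hdiag.
  unfold poisson_avg at 1.
  rewrite (functional_extensionality _ _ thin_term_diagonal).
  symmetry. apply series_eq. eapply infinite_sum_ext; [|apply Hdiag].
  - intros k. apply series_eq, thin_row.
  - apply Rmult_le_pos; [left; apply exp_pos | auto].
  - apply Rmult_le_pos; lra.
  - apply Rmult_le_pos; lra.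
  - apply thin_term_bound.
Qed.
End Thinning.

Lemma weight_pos beta E K s : 0 < weight beta E K s.
Proof. apply exp_pos. Qed.

Lemma replica_weight_pos beta E K ss : 0 < prodR (map (weight beta E K) ss).
Proof. apply prodR_pos; intros; apply weight_pos. Qed.

Lemma Omega_den_pos N beta E K m :
  0 < sumL (tuples (configs N) m) (fun ss => prodR (map (weight beta E K) ss)).
Proof.
  apply sumL_pos; [intros; apply replica_weight_pos|].
  intros H. pose proof (f_equal (@length _) H) as Hl.
  rewrite length_tuples, length_configs in Hl. simpl in Hl.
  apply (Nat.pow_nonzero (2 ^ N) m); [apply Nat.pow_nonzero|]; lia.
Qed.

Lemma ratio_bound x d B : 0 < d -> Rabs x <= B * d -> Rabs (x / d) <= B.
Proof.
  intros Hd Hx. unfold Rdiv. rewrite Rabs_mult, Rabs_inv, (Rabs_right d) by lra.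
  apply Rmult_le_reg_r with d; auto. rewrite Rmult_assoc, Rinv_l, Rmult_1_r by lra. exact Hx.
Qed.

Lemma Omega_bound N beta E K m Y B :
  (forall ss, In ss (tuples (configs N) m) -> Rabs (Y ss) <= B) -> Rabs (Omega N beta E K m Y) <= B.
Proof.
  intros HB. apply ratio_bound; [apply Omega_den_pos|].
  apply sumL_weighted_bound; auto. intros; left; apply replica_weight_pos.
Qed.

Lemma Omega_sum N beta E K m (J : list nat) c (Y : nat -> list (list bool) -> R) :
  Omega N beta E K m (fun ss => sumL J (fun j => c * Y j ss))
  = sumL J (fun j => c * Omega N beta E K m (Y j)).
Proof.
  unfold Omega, Rdiv.
  rewrite (sumL_ext _ _ (fun ss => sumL J (fun j => c * (Y j ss * prodR (map (weight beta E K) ss)))))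
    by (intros; rewrite <- sumL_scal_r; apply sumL_ext; intros; ring).
  rewrite sumL_swap, <- sumL_scal_r. apply sumL_ext; intros j. rewrite sumL_scal. ring.
Qed.

Lemma Omega_minus N beta E K m Y1 Y2 :
  Omega N beta E K m (fun ss => Y1 ss - Y2 ss) = Omega N beta E K m Y1 - Omega N beta E K m Y2.
Proof.
  unfold Omega.
  rewrite (sumL_ext _ _ (fun ss => Y1 ss * prodR (map (weight beta E K) ss)
                                   - Y2 ss * prodR (map (weight beta E K) ss))) by (intros; ring).
  rewrite sumL_minus. unfold Rdiv. ring.
Qed.

Lemma omega_Omega N beta E K g :
  omega N beta E K g = Omega N beta E K 1 (fun ss => g (nth 0 ss [])).
Proof.
  unfold omega, Omega. rewrite !sumL_tuples_S. simpl. f_equal; apply sumL_ext; intros; ring.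
Qed.

(** Every configuration on [N+1] sites is [gauge b s] for a unique pair. *)
Definition eps (b : bool) : R := if b then 1 else -1.
Definition gauge (b : bool) (s : list bool) : list bool := (if b then s else map negb s) ++ [b].

Fixpoint gauge_replicas (bs : list bool) (ss : list (list bool)) : list (list bool) :=
  match bs, ss with
  | b :: bs', s :: ss' => gauge b s :: gauge_replicas bs' ss'
  | _, _ => []
  end.

Lemma eps_sq b : eps b * eps b = 1.
Proof. destruct b; simpl; lra. Qed.

Lemma spin_abs s i : Rabs (spin s i) = 1.
Proof. unfold spin. destruct (nth i s false); [apply Rabs_R1 | rewrite Rabs_left by lra; lra]. Qed.

Lemma spin_gauge_lt b s i : (i < length s)%nat -> spin (gauge b s) i = eps b * spin s i.
Proof.
  intros H. unfold spin, gauge. rewrite app_nth1 by (destruct b; rewrite ?length_map; auto).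
  destruct b; simpl; [lra|].
  rewrite (nth_indep _ false (negb true)), map_nth by (rewrite length_map; auto).
  rewrite (nth_indep _ true false) by auto. destruct (nth i s false); simpl; lra.
Qed.

Lemma spin_gauge_last b s : spin (gauge b s) (length s) = eps b.
Proof.
  unfold spin, gauge. rewrite app_nth2 by (destruct b; rewrite ?length_map; auto).
  replace (length s - length (if b then s else map negb s))%nat with 0%nat
    by (destruct b; rewrite ?length_map; lia).
  destruct b; reflexivity.
Qed.

Lemma sumL_configs_gauge N f :
  sumL (configs (S N)) f = sumL (configs N) (fun s => f (gauge true s) + f (gauge false s)).
Proof.
  rewrite sumL_configs_last, !sumL_plus. f_equal. unfold gauge; simpl.
  rewrite <- (sumL_configs_invol N (map negb) (fun s => f (s ++ [false]))); [reflexivity|].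
  intros s Hs. rewrite length_map, map_map. split; auto.
  erewrite map_ext; [apply map_id|]. intros []; reflexivity.
Qed.

Lemma sumL_tuples_gauge N m : forall Psi,
  sumL (tuples (configs (S N)) m) Psi =
  sumL (tuples (configs N) m)
    (fun ss => sumL (tuples [true; false] m) (fun bs => Psi (gauge_replicas bs ss))).
Proof.
  induction m; intros Psi; [simpl; ring|].
  rewrite sumL_tuples_S.
  rewrite (sumL_ext _ _ (fun x => sumL (tuples (configs N) m)
             (fun ss => sumL (tuples [true; false] m) (fun bs => Psi (x :: gauge_replicas bs ss)))))
    by (intros; apply IHm).
  rewrite sumL_configs_gauge, sumL_tuples_S. apply sumL_ext; intros s.
  rewrite <- sumL_plus. apply sumL_ext; intros ss.
  rewrite sumL_tuples_S. simpl. lra.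
Qed.

Lemma nth_gauge_replicas bs ss a : length bs = length ss -> (a < length ss)%nat ->
  nth a (gauge_replicas bs ss) [] = gauge (nth a bs true) (nth a ss []).
Proof.
  revert ss a; induction bs; intros [|s ss] x H Hx; simpl in *; try lia.
  destruct x; auto. apply IHbs; lia.
Qed.

Section EdgeClasses.
Variable N : nat.

Definition is_bulk (e : nat * nat) : bool := Nat.ltb (fst e) N && Nat.ltb (snd e) N.
Definition is_mixed (e : nat * nat) : bool := negb (Nat.eqb (fst e) N && Nat.eqb (snd e) N).
Definition inner_end (e : nat * nat) : nat := if Nat.eqb (fst e) N then snd e else fst e.

Definition non_bulk (E : list (nat * nat)) := filter (fun e => negb (is_bulk e)) E.
Definition bulk_edges (E : list (nat * nat)) := filter is_bulk E.
Definition field_sites (E : list (nat * nat)) := map inner_end (filter is_mixed (non_bulk E)).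
Definition loop_count (E : list (nat * nat)) : nat :=
  length (filter (fun e => negb (is_mixed e)) (non_bulk E)).

Lemma edge_gauge b s e : length s = N -> (fst e <= N)%nat -> (snd e <= N)%nat ->
  spin (gauge b s) (fst e) * spin (gauge b s) (snd e) =
  if is_bulk e then spin s (fst e) * spin s (snd e)
  else if is_mixed e then spin s (inner_end e) else 1.
Proof.
  intros Hs Hi Hj. destruct e as [i j]. simpl in *. unfold is_bulk, is_mixed, inner_end; simpl.
  subst N.
  destruct (Nat.ltb_spec i (length s)), (Nat.ltb_spec j (length s)); simpl.
  - rewrite !spin_gauge_lt by lia. destruct b; simpl; ring.
  - replace j with (length s) by lia. rewrite Nat.eqb_refl, (proj2 (Nat.eqb_neq i _)) by lia.
    rewrite spin_gauge_last, spin_gauge_lt by lia. destruct b; simpl; ring.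
  - replace i with (length s) by lia. rewrite Nat.eqb_refl, (proj2 (Nat.eqb_neq j _)) by lia.
    rewrite spin_gauge_last, spin_gauge_lt by lia. destruct b; simpl; ring.
  - replace i with (length s) by lia. replace j with (length s) by lia.
    rewrite Nat.eqb_refl, spin_gauge_last. apply eps_sq.
Qed.

Lemma weight_gauge beta E b s : length s = N ->
  (forall e, In e E -> (fst e <= N)%nat /\ (snd e <= N)%nat) ->
  weight beta E [] (gauge b s) =
  weight beta (bulk_edges E) (field_sites E) s * exp (beta * INR (loop_count E)).
Proof.
  intros Hs HE. unfold weight, bulk_edges, field_sites, loop_count, non_bulk.
  rewrite <- exp_plus. f_equal. unfold ham, field. simpl (sumR (map _ [])).
  rewrite sumL_map, (sumL_filter E is_bulk), (sumL_filter (filter (fun e => negb (is_bulk e)) E) is_mixed).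
  rewrite (sumL_ext_in (filter is_bulk E) _ (fun e => spin s (fst e) * spin s (snd e))).
  2:{ intros e He. apply filter_In in He. destruct He as [He Hb]. destruct (HE e He).
      rewrite edge_gauge, Hb by auto. reflexivity. }
  rewrite (sumL_ext_in (filter is_mixed _) _ (fun e => spin s (inner_end e))).
  2:{ intros e He. apply filter_In in He. destruct He as [He Hm]. apply filter_In in He.
      destruct He as [He Hb]. destruct (HE e He). rewrite edge_gauge by auto.
      destruct (is_bulk e); [discriminate|]. rewrite Hm. reflexivity. }
  rewrite (sumL_ext_in (filter (fun e => negb (is_mixed e)) _) _ (fun _ => 1)).
  2:{ intros e He. apply filter_In in He. destruct He as [He Hm]. apply filter_In in He.
      destruct He as [He Hb]. destruct (HE e He). rewrite edge_gauge by auto.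
      destruct (is_bulk e); [discriminate|]. destruct (is_mixed e); [discriminate | reflexivity]. }
  rewrite sumL_const. ring.
Qed.
End EdgeClasses.

(** Gauge identity for Boltzmann states: if [G] only sees gauge-invariant
    information, i.e. [G (gauge_replicas bs ss) = H ss], the [(N+1)]-site state of
    [G] with edges [E] is the [N]-site state of [H] with the bulk edges of [E]
    and a one-body field at the inner ends of its mixed edges; the loops
    contribute a constant factor that cancels in the ratio. *)
Section GaugeState.
Variables (N : nat) (beta : R) (E : list (nat * nat)).
Hypothesis HE : forall e, In e E -> (fst e <= N)%nat /\ (snd e <= N)%nat.

Let c := exp (beta * INR (loop_count N E)).

Lemma replica_weight_gauge bs ss : length bs = length ss -> (forall s, In s ss -> length s = N) ->
  prodR (map (weight beta E []) (gauge_replicas bs ss)) =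
  c ^ length ss * prodR (map (weight beta (bulk_edges N E) (field_sites N E)) ss).
Proof.
  revert ss; induction bs; intros [|s ss] Hl Hs; simpl in *; try lia; try lra.
  rewrite IHbs, (weight_gauge N) by auto. fold c. ring.
Qed.

Lemma gauge_sum m (Y H : list (list bool) -> R) :
  (forall ss bs, In ss (tuples (configs N) m) -> In bs (tuples [true; false] m) ->
     Y (gauge_replicas bs ss) = H ss) ->
  sumL (tuples (configs (S N)) m) (fun ss => Y ss * prodR (map (weight beta E []) ss)) =
  (INR (2 ^ m) * c ^ m) *
  sumL (tuples (configs N) m) (fun ss => H ss * prodR (map (weight beta (bulk_edges N E) (field_sites N E)) ss)).
Proof.
  intros HY. rewrite sumL_tuples_gauge, <- sumL_scal. apply sumL_ext_in. intros ss Hss.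
  rewrite (sumL_ext_in _ _ (fun _ => c ^ m * (H ss * prodR (map (weight beta (bulk_edges N E) (field_sites N E)) ss)))).
  - rewrite sumL_const, length_tuples. simpl length. ring.
  - intros bs Hbs. rewrite HY by auto.
    apply In_tuples in Hss, Hbs. destruct Hss as [Hl1 Hin], Hbs as [Hl2 _].
    rewrite replica_weight_gauge by (try lia; intros; apply In_configs; auto). rewrite Hl1. ring.
Qed.

Lemma Omega_gauge m (G H : list (list bool) -> R) :
  (forall ss bs, In ss (tuples (configs N) m) -> In bs (tuples [true; false] m) ->
     G (gauge_replicas bs ss) = H ss) ->
  Omega (S N) beta E [] m G = Omega N beta (bulk_edges N E) (field_sites N E) m H.
Proof.
  intros HG. unfold Omega. rewrite (gauge_sum m G H HG).
  rewrite (sumL_ext _ (fun ss => prodR (map (weight beta E []) ss))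
                      (fun ss => 1 * prodR (map (weight beta E []) ss))) by (intros; ring).
  rewrite (gauge_sum m (fun _ => 1) (fun _ => 1) (fun _ _ _ _ => eq_refl)).
  rewrite (sumL_ext _ (fun ss => 1 * _) (fun ss => prodR (map (weight beta (bulk_edges N E) (field_sites N E)) ss)))
    by (intros; ring).
  pose proof (Omega_den_pos N beta (bulk_edges N E) (field_sites N E) m).
  assert (0 < INR (2 ^ m)) by (apply lt_0_INR, Nat.neq_0_lt_0, Nat.pow_nonzero; lia).
  assert (0 < c ^ m) by apply pow_lt, exp_pos.
  field. split; lra.
Qed.
End GaugeState.

Lemma bulk_pairs N : Permutation (bulk_edges N (pairs (S N))) (pairs N).
Proof.
  apply NoDup_Permutation; [apply NoDup_filter, NoDup_pairs | apply NoDup_pairs|].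
  intros [i j]. unfold bulk_edges. rewrite filter_In, !In_pairs. unfold is_bulk; simpl.
  rewrite Bool.andb_true_iff, !Nat.ltb_lt. lia.
Qed.

Definition mixed_pairs N := map (fun i => (i, N)) (sites N) ++ map (fun j => (N, j)) (sites N).

Lemma mixed_pairs_perm N :
  Permutation (filter (is_mixed N) (non_bulk N (pairs (S N)))) (mixed_pairs N).
Proof.
  apply NoDup_Permutation; [apply NoDup_filter, NoDup_filter, NoDup_pairs| |].
  - unfold mixed_pairs. apply NoDup_app;
      try (apply NoDup_map_in; [apply seq_NoDup | intros x y _ _ H; inversion H; auto]).
    intros x H1 H2. apply in_map_iff in H1, H2. destruct H1 as [i [<- Hi]], H2 as [j [Hj _]].
    inversion Hj; subst. unfold sites in Hi. apply in_seq in Hi. lia.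
  - intros [i j]. unfold non_bulk, mixed_pairs, sites.
    rewrite !filter_In, In_pairs, in_app_iff, !in_map_iff. unfold is_bulk, is_mixed; simpl.
    split.
    + intros [[[Hi Hj] Hb] Hm].
      destruct (Nat.ltb_spec i N), (Nat.ltb_spec j N); simpl in Hb; try discriminate.
      * left. exists i. split; [f_equal; lia | apply in_seq; lia].
      * right. exists j. split; [f_equal; lia | apply in_seq; lia].
      * replace i with N in Hm by lia. replace j with N in Hm by lia.
        rewrite Nat.eqb_refl in Hm. discriminate.
    + intros [[k [Hk Hin]] | [k [Hk Hin]]]; injection Hk; intros; subst i j; apply in_seq in Hin;
        rewrite Nat.ltb_irrefl, (proj2 (Nat.eqb_neq k N)), ?Nat.eqb_refl, ?Bool.andb_false_r by lia;
        simpl; rewrite ?Bool.andb_false_r; repeat split; lia.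
Qed.

Lemma loop_pairs_perm N :
  Permutation (filter (fun e => negb (is_mixed N e)) (non_bulk N (pairs (S N)))) [(N, N)].
Proof.
  apply NoDup_Permutation; [apply NoDup_filter, NoDup_filter, NoDup_pairs | repeat constructor; intros [] |].
  intros [i j]. unfold non_bulk. rewrite !filter_In, In_pairs. unfold is_bulk, is_mixed; simpl.
  rewrite Bool.negb_involutive. split.
  - intros [[[Hi Hj] Hb] Hm]. apply Bool.andb_true_iff in Hm. destruct Hm as [H1 H2].
    apply Nat.eqb_eq in H1, H2. subst. left; auto.
  - intros [H | []]. inversion H; subst. rewrite Nat.eqb_refl, Nat.ltb_irrefl. simpl. repeat split; lia.
Qed.

Lemma inner_ends_mixed_pairs N : map (inner_end N) (mixed_pairs N) = sites N ++ sites N.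
Proof.
  unfold mixed_pairs, sites. rewrite map_app, !map_map.
  f_equal; rewrite <- (map_id (seq 0 N)) at 2; apply map_ext_in; intros i Hi;
    apply in_seq in Hi; unfold inner_end; simpl.
  - rewrite (proj2 (Nat.eqb_neq i N)) by lia. reflexivity.
  - rewrite Nat.eqb_refl. reflexivity.
Qed.

Lemma length_non_bulk N : length (non_bulk N (pairs (S N))) = (2 * N + 1)%nat.
Proof.
  pose proof (length_filter_split (pairs (S N)) (is_bulk N)) as Hs.
  pose proof (Permutation_length (bulk_pairs N)) as Hb. unfold bulk_edges in Hb.
  rewrite Hb, !length_pairs in Hs. unfold non_bulk. lia.
Qed.

Lemma bulk_thinning N lam B (Phi : list (nat * nat) -> list (nat * nat) -> R) :
  (1 <= N)%nat -> 0 <= lam -> (forall E1 E2, Rabs (Phi E1 E2) <= B) ->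
  poisson_avg lam (pairs (S N)) (fun E => Phi (bulk_edges N E) (non_bulk N E)) =
  poisson_avg (lam * INR (N * N) / INR (S N * S N)) (pairs N)
    (fun E1 => poisson_avg (lam * INR (2 * N + 1) / INR (S N * S N)) (non_bulk N (pairs (S N)))
       (fun E2 => Phi E1 E2)).
Proof.
  intros HN Hlam HPhi.
  assert (L1 : length (filter (is_bulk N) (pairs (S N))) = (N * N)%nat)
    by (rewrite <- length_pairs; exact (Permutation_length (bulk_pairs N))).
  assert (L2 : length (filter (fun e => negb (is_bulk N e)) (pairs (S N))) = (2 * N + 1)%nat)
    by exact (length_non_bulk N).
  unfold bulk_edges, non_bulk.
  rewrite (poisson_thinning (pairs (S N)) (is_bulk N) lam B Phi) by (auto; rewrite ?L1, ?L2; nia).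
  rewrite L1, L2, length_pairs. apply poisson_avg_perm, bulk_pairs.
Qed.

Lemma mixed_edges_as_field N lam B (F : list nat -> R) :
  (1 <= N)%nat -> 0 <= lam -> (forall K, Rabs (F K) <= B) ->
  poisson_avg lam (non_bulk N (pairs (S N))) (fun E2 => F (map (inner_end N) (filter (is_mixed N) E2))) =
  poisson_avg (lam * INR (2 * N) / INR (2 * N + 1)) (sites N) F.
Proof.
  intros HN Hlam HF.
  pose proof (Permutation_length (mixed_pairs_perm N)) as L1.
  pose proof (Permutation_length (loop_pairs_perm N)) as L2.
  unfold mixed_pairs in L1. rewrite length_app, !length_map in L1. unfold sites in L1.
  rewrite length_seq in L1. replace (N + N)%nat with (2 * N)%nat in L1 by lia. cbn [length] in L2.
  rewrite (poisson_thinning _ (is_mixed N) lam B (fun A _ => F (map (inner_end N) A))) 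
    by (auto; lia).
  rewrite L1, length_non_bulk.
  rewrite (poisson_avg_ext _ _ _ (fun A => F (map (inner_end N) A)))
    by (intros; apply poisson_avg_const; intros Hc; rewrite Hc in L2; discriminate).
  rewrite (poisson_avg_map _ _ (sites N ++ sites N)).
  - apply poisson_avg_double. unfold sites. destruct N; [lia | discriminate].
  - rewrite <- inner_ends_mixed_pairs. apply Permutation_map, mixed_pairs_perm.
Qed.

Theorem bulk_state_gauge_fixed N m alpha beta G H B :
  (1 <= N)%nat -> 0 <= alpha -> (forall ss, Rabs (H ss) <= B) ->
  (forall ss bs, In ss (tuples (configs N) m) -> In bs (tuples [true; false] m) ->
     G (gauge_replicas bs ss) = H ss) ->
  qexp_bulk (S N) alpha (fun E => Omega (S N) beta E [] m G) =
  qexp_t N alpha 1 (fun E K => Omega N beta E K m H).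
Proof.
  intros HN Ha HB HG.
  assert (HNR : 0 < INR N) by (apply lt_0_INR; lia).
  change (qexp_bulk (S N) alpha ?F) with (poisson_avg (alpha * INR (S N)) (pairs (S N)) F).
  change (qexp_t N alpha 1 ?F) with
    (poisson_avg (tilde_alpha N alpha * INR N) (pairs N)
       (fun E => poisson_avg (2 * tilde_alpha N alpha * 1) (sites N) (fun K => F E K))).
  rewrite (poisson_avg_ext _ _ _
             (fun E => Omega N beta (bulk_edges N E) (field_sites N E) m H)).
  2:{ intros P E HE. apply Omega_gauge; auto. intros [i j] He.
      apply In_tuples in HE. apply (proj2 HE), In_pairs in He. simpl; lia. }
  assert (Hlam : 0 <= alpha * INR (S N)) by (apply Rmult_le_pos; [auto | apply pos_INR]).
  rewrite (bulk_thinning N _ B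
             (fun E1 E2 => Omega N beta E1 (map (inner_end N) (filter (is_mixed N) E2)) m H))
    by (auto; intros; apply Omega_bound; auto).
  assert (Hlam2 : 0 <= alpha * INR (S N) * INR (2 * N + 1) / INR (S N * S N))
    by (apply Rdiv_nonneg; [apply Rmult_le_pos; [auto | apply pos_INR] | apply lt_0_INR; lia]).
  rewrite (poisson_avg_ext _ _ _ (fun E1 =>
     poisson_avg (alpha * INR (S N) * INR (2 * N + 1) / INR (S N * S N) * INR (2 * N) / INR (2 * N + 1))
       (sites N) (fun K => Omega N beta E1 K m H)))
    by (intros P E1 _; apply (mixed_edges_as_field N _ B (fun K => Omega N beta E1 K m H));
        auto; intros; apply Omega_bound; auto).
  (* both Poisson means agree with those of the t-dependent state *)
  assert (HN1 : INR (N + 1) = INR N + 1) by (rewrite plus_INR; reflexivity).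
  replace (alpha * INR (S N) * INR (N * N) / INR (S N * S N)) with (tilde_alpha N alpha * INR N)
    by (unfold tilde_alpha; rewrite HN1, !mult_INR, S_INR; field; lra).
  replace (alpha * INR (S N) * INR (2 * N + 1) / INR (S N * S N) * INR (2 * N) / INR (2 * N + 1))
    with (2 * tilde_alpha N alpha * 1); [reflexivity|].
  unfold tilde_alpha. rewrite HN1, plus_INR, !mult_INR, S_INR. simpl (INR 2). simpl (INR 1).
  field. lra.
Qed.

Lemma spin_mono_abs s idx : Rabs (spin_mono s idx) <= 1.
Proof. apply prodR_abs_le1. intros; rewrite spin_abs; lra. Qed.

Lemma spin_mono_gauge b s idx : Forall (fun i => (i < length s)%nat) idx ->
  spin_mono (gauge b s) idx = eps b ^ length idx * spin_mono s idx.
Proof.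
  induction 1; unfold spin_mono in *; simpl; [ring|].
  rewrite IHForall, spin_gauge_lt by auto. ring.
Qed.

(** Part 1, in exact form: the [t = 1] correlation of [σ_{i_1}⋯σ_{i_n}] equals
    the [(N+1)]-spin correlation of [σ_{i_1}⋯σ_{i_n} σ_{N+1}^n], because the
    latter observable is gauge invariant ([eps b ^ n * eps b ^ n = 1]). *)
Theorem spin_correlation_identity alpha beta N idx :
  0 <= alpha -> (1 <= N)%nat -> Forall (fun i => (i < N)%nat) idx ->
  qexp_t N alpha 1 (fun E K => omega N beta E K (fun s => spin_mono s idx)) =
  qexp_bulk (S N) alpha (fun E => omega (S N) beta E [] (fun s => spin_mono s idx * spin s N ^ length idx)).
Proof.
  intros Ha HN Hidx.
  replace (fun E K => omega N beta E K (fun s => spin_mono s idx))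
    with (fun E K => Omega N beta E K 1 (fun ss => spin_mono (nth 0 ss []) idx))
    by (do 2 (apply functional_extensionality; intro); symmetry; apply omega_Omega).
  replace (fun E => omega (S N) beta E [] (fun s => spin_mono s idx * spin s N ^ length idx))
    with (fun E => Omega (S N) beta E [] 1
                     (fun ss => spin_mono (nth 0 ss []) idx * spin (nth 0 ss []) N ^ length idx))
    by (apply functional_extensionality; intro; symmetry; apply omega_Omega).
  symmetry. apply (bulk_state_gauge_fixed N 1 alpha beta _ _ 1); auto; [intros; apply spin_mono_abs|].
  intros ss bs Hss Hbs. apply In_tuples in Hss, Hbs. destruct Hss as [L1 Hs], Hbs as [L2 _].
  destruct ss as [|s [|]]; try discriminate. destruct bs as [|b [|]]; try discriminate.
  assert (Hls : length s = N) by (apply In_configs, Hs; left; auto).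
  subst N. simpl. rewrite spin_mono_gauge, spin_gauge_last by auto.
  rewrite <- (Rmult_1_r (spin_mono s idx)) at 2. rewrite <- (pow1 (length idx)), <- (eps_sq b).
  rewrite Rpow_mult_distr. ring.
Qed.

Definition replica_spins (A : list nat) (ss : list (list bool)) (i : nat) : R :=
  prodR (map (fun a => spin (nth a ss []) i) A).

Lemma replica_spins_abs A ss i : Rabs (replica_spins A ss i) <= 1.
Proof. apply prodR_abs_le1. intros; rewrite spin_abs; lra. Qed.

Lemma overlap_abs M A ss : Rabs (overlap M A ss) <= 1.
Proof.
  unfold overlap. destruct M as [|M]; [simpl; rewrite Rinv_0, Rmult_0_l, Rabs_R0; lra|].
  assert (HM : 0 < INR (S M)) by (apply lt_0_INR; lia).
  rewrite Rabs_mult, Rabs_right by (apply Rle_ge; left; apply Rinv_0_lt_compat; auto).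
  apply Rmult_le_reg_l with (INR (S M)); auto.
  rewrite <- Rmult_assoc, Rinv_r, Rmult_1_l, Rmult_1_r by lra.
  replace (INR (S M)) with (INR (length (sites (S M))) * 1) by (unfold sites; rewrite length_seq; ring).
  apply sumL_abs_le. intros; apply replica_spins_abs.
Qed.

Lemma mono_val_abs M mono ss : Rabs (mono_val M mono ss) <= 1.
Proof. apply prodR_abs_le1. intros; apply overlap_abs. Qed.

Lemma fill_val M m mono ss :
  mono_val M (fill m mono) ss = mono_val M mono ss * overlap M (odd_set m mono) ss.
Proof. unfold mono_val, fill. rewrite map_app, prodR_app. simpl. ring. Qed.

Lemma prod_indicator (l : list nat) x y : NoDup l -> In x l ->
  prodR (map (fun a => if Nat.eq_dec x a then y else 1) l) = y.
Proof.
  induction l; intros Hn Hi; [destruct Hi|]. inversion Hn; subst. simpl.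
  destruct (Nat.eq_dec x a) as [<- | Hne].
  - rewrite (prodR_ext_in _ _ (fun _ => 1)), prodR_ones; [ring|].
    intros z Hz. destruct (Nat.eq_dec x z); [subst; contradiction | auto].
  - destruct Hi; [congruence|]. rewrite IHl; auto. ring.
Qed.

Lemma prod_count (f : nat -> R) m (A : list nat) : Forall (fun a => (a < m)%nat) A ->
  prodR (map f A) = prodR (map (fun a => f a ^ count_occ Nat.eq_dec A a) (seq 0 m)).
Proof.
  induction 1; simpl.
  - symmetry. apply prodR_ones.
  - rewrite IHForall.
    transitivity (prodR (map (fun a => (if Nat.eq_dec x a then f x else 1)
                                       * f a ^ count_occ Nat.eq_dec l a) (seq 0 m))).
    + rewrite prodR_mult, prod_indicator; [reflexivity | apply seq_NoDup | apply in_seq; lia].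
    + apply prodR_ext_in. intros z _. destruct (Nat.eq_dec x z); subst; simpl; ring.
Qed.

Lemma prod_mono_occ (f : nat -> R) m mono : valid_mono m mono ->
  prodR (map (fun A => prodR (map f A)) mono) = prodR (map (fun a => f a ^ occ a mono) (seq 0 m)).
Proof.
  induction 1 as [|A mono [_ [_ HA]] _ IH]; simpl.
  - symmetry. apply prodR_ones.
  - rewrite IH, (prod_count f m A HA), <- prodR_mult.
    apply prodR_ext_in. intros a _. unfold occ; simpl. rewrite pow_add. ring.
Qed.

Lemma prod_filter (f : nat -> R) (p : nat -> bool) l :
  prodR (map f (filter p l)) = prodR (map (fun a => if p a then f a else 1) l).
Proof. induction l; simpl; auto. destruct (p a); simpl; rewrite IHl; ring. Qed.

(** Signs [f a = ±1] attached to the replicas cancel in a filled monomial: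
    every replica occurs an even number of times in [mono ++ [odd_set m mono]]. *)
Lemma sign_cancel (f : nat -> R) m mono : valid_mono m mono ->
  (forall a, f a * f a = 1) ->
  prodR (map (fun A => prodR (map f A)) mono) * prodR (map f (odd_set m mono)) = 1.
Proof.
  intros Hv Hf. rewrite (prod_mono_occ f m) by auto. unfold odd_set.
  rewrite prod_filter, <- prodR_mult, (prodR_ext_in _ _ (fun _ => 1)); [apply prodR_ones|].
  intros a _. assert (Hsq : f a ^ 2 = 1) by (simpl; rewrite Rmult_1_r; auto).
  destruct (Nat.Even_or_Odd (occ a mono)) as [[k Hk] | [k Hk]].
  - replace (Nat.odd (occ a mono)) with false
      by (rewrite Hk, Nat.odd_mul, Nat.odd_2; reflexivity).
    rewrite Hk, pow_mult, Hsq, pow1. ring.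
  - replace (Nat.odd (occ a mono)) with true by (symmetry; apply Nat.odd_spec; exists k; auto).
    rewrite Hk, pow_add, pow_mult, Hsq, pow1. simpl. ring_simplify. auto.
Qed.

Lemma overlap_gauge N A bs ss :
  length bs = length ss -> (forall s, In s ss -> length s = N) ->
  Forall (fun a => (a < length ss)%nat) A ->
  overlap N A (gauge_replicas bs ss) = prodR (map (fun a => eps (nth a bs true)) A) * overlap N A ss.
Proof.
  intros Hl Hs HA. unfold overlap.
  rewrite (sumL_ext_in _ _ (fun i => prodR (map (fun a => eps (nth a bs true)) A)
                                   * prodR (map (fun a => spin (nth a ss []) i) A))).
  - rewrite sumL_scal. ring.
  - intros i Hi. unfold sites in Hi. apply in_seq in Hi.
    rewrite <- prodR_mult. apply prodR_ext_in. intros a Ha. rewrite Forall_forall in HA.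
    rewrite nth_gauge_replicas by auto. apply spin_gauge_lt.
    rewrite Hs by (apply nth_In; auto). lia.
Qed.

(** The gauge-invariant extension of a monomial to [N+1] sites: the overlaps on
    the first [N] sites times the extra spin of every replica of odd multiplicity. *)
Definition gauge_fixed_mono (m : nat) (mono : list (list nat)) (N : nat) (ss : list (list bool)) : R :=
  mono_val N mono ss * replica_spins (odd_set m mono) ss N.

Lemma gauge_fixed_mono_abs m mono N ss : Rabs (gauge_fixed_mono m mono N ss) <= 1.
Proof.
  unfold gauge_fixed_mono. rewrite Rabs_mult, <- (Rmult_1_r 1).
  apply Rmult_le_compat; try apply Rabs_pos; [apply mono_val_abs | apply replica_spins_abs].
Qed.

Lemma gauge_fixed_mono_gauge N m mono bs ss :
  valid_mono m mono -> length bs = m -> length ss = m -> (forall s, In s ss -> length s = N) ->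
  gauge_fixed_mono m mono N (gauge_replicas bs ss) = mono_val N mono ss.
Proof.
  intros Hv Hbs Hss Hs. unfold gauge_fixed_mono, mono_val, replica_spins.
  rewrite (prodR_ext_in _ _ (fun A => prodR (map (fun a => eps (nth a bs true)) A) * overlap N A ss)).
  2:{ intros A HA. apply overlap_gauge; try lia; auto.
      rewrite Hss. unfold valid_mono in Hv. rewrite Forall_forall in Hv. apply (Hv A HA). }
  rewrite (prodR_ext_in (odd_set m mono) _ (fun a => eps (nth a bs true))).
  2:{ intros a Ha. unfold odd_set in Ha. apply filter_In in Ha. destruct Ha as [Ha _].
      apply in_seq in Ha. rewrite nth_gauge_replicas by lia.
      rewrite <- (Hs (nth a ss [])) by (apply nth_In; lia). apply spin_gauge_last. }
  rewrite prodR_mult, (Rmult_comm (prodR _) (prodR (map (fun A => overlap N A ss) mono))).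
  rewrite Rmult_assoc, (sign_cancel _ m) by (auto; intros; apply eps_sq). ring.
Qed.

(** Exchange symmetry: the quenched [M]-site state is invariant under the
    transposition of two sites [j] and [k], since it permutes the uniform edges. *)
Section SiteTransposition.
Variables (j k : nat).

Definition transp (i : nat) : nat := if Nat.eqb i j then k else if Nat.eqb i k then j else i.
Definition transp_config (s : list bool) : list bool :=
  map (fun i => nth (transp i) s false) (seq 0 (length s)).
Definition transp_edge (e : nat * nat) : nat * nat := (transp (fst e), transp (snd e)).

Lemma transp_invol i : transp (transp i) = i.
Proof.
  unfold transp. destruct (Nat.eqb_spec i j), (Nat.eqb_spec i k); subst;
  repeat (first [rewrite Nat.eqb_refl
                | match goal with |- context [Nat.eqb ?a ?b] => destruct (Nat.eqb_spec a b) end]);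
  subst; auto; lia.
Qed.

Lemma transp_k : transp k = j.
Proof. unfold transp. destruct (Nat.eqb_spec k j); [auto | rewrite Nat.eqb_refl; auto]. Qed.

Section Bounded.
Variable M : nat.
Hypotheses (Hj : (j < M)%nat) (Hk : (k < M)%nat).

Lemma transp_lt i : (i < M)%nat -> (transp i < M)%nat.
Proof. intros. unfold transp. destruct (Nat.eqb i j); [lia | destruct (Nat.eqb i k); lia]. Qed.

Lemma transp_ge i : (M <= i)%nat -> transp i = i.
Proof.
  intros. unfold transp. destruct (Nat.eqb_spec i j); [lia|]. destruct (Nat.eqb_spec i k); [lia | auto].
Qed.

Lemma transp_sites : Permutation (map transp (sites M)) (sites M).
Proof.
  unfold sites. apply NoDup_Permutation.
  - apply NoDup_map_in; [apply seq_NoDup|]. intros x y _ _ H.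
    rewrite <- (transp_invol x), <- (transp_invol y), H. auto.
  - apply seq_NoDup.
  - intros x. rewrite in_map_iff, in_seq. split.
    + intros [y [<- Hy]]. apply in_seq in Hy. pose proof (transp_lt y ltac:(lia)). lia.
    + intros Hx. exists (transp x). rewrite transp_invol. split; auto. apply in_seq.
      pose proof (transp_lt x ltac:(lia)). lia.
Qed.

Lemma transp_pairs : Permutation (map transp_edge (pairs M)) (pairs M).
Proof.
  apply NoDup_Permutation.
  - apply NoDup_map_in; [apply NoDup_pairs|]. intros [a b] [c d] _ _ H. unfold transp_edge in H.
    simpl in H. inversion H. rewrite <- (transp_invol a), <- (transp_invol b), H1, H2, !transp_invol. auto.
  - apply NoDup_pairs.
  - intros [a b]. rewrite in_map_iff, In_pairs. split.
    + intros [[c d] [Hx Hin]]. unfold transp_edge in Hx. simpl in Hx. inversion Hx; subst.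
      apply In_pairs in Hin. split; apply transp_lt; lia.
    + intros Hin. exists (transp a, transp b). unfold transp_edge; simpl. rewrite !transp_invol.
      split; auto. apply In_pairs. split; apply transp_lt; lia.
Qed.

Lemma nth_transp_config s i : length s = M -> nth i (transp_config s) false = nth (transp i) s false.
Proof.
  intros Hs. unfold transp_config. destruct (Nat.lt_ge_cases i (length s)).
  - rewrite (nth_indep (map _ (seq 0 (length s))) false ((fun i => nth (transp i) s false) 0%nat))
      by (rewrite length_map, length_seq; auto).
    rewrite (map_nth (fun i => nth (transp i) s false)), seq_nth by auto. reflexivity.
  - rewrite transp_ge, !nth_overflow by (rewrite ?length_map, ?length_seq; lia). reflexivity.
Qed.

Lemma spin_transp_config s i : length s = M -> spin (transp_config s) i = spin s (transp i).
Proof. intros. unfold spin. rewrite nth_transp_config; auto. Qed.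

Lemma length_transp_config s : length (transp_config s) = length s.
Proof. unfold transp_config. rewrite length_map, length_seq. auto. Qed.

Lemma transp_config_invol s : length s = M -> transp_config (transp_config s) = s.
Proof.
  intros Hs. apply nth_ext with (d := false) (d' := false); rewrite ?length_transp_config; auto.
  intros i Hi. rewrite nth_transp_config by (rewrite length_transp_config; auto).
  rewrite nth_transp_config, transp_invol by auto. reflexivity.
Qed.

Lemma weight_transp beta E s : length s = M ->
  weight beta E [] (transp_config s) = weight beta (map transp_edge E) [] s.
Proof.
  intros Hs. unfold weight, ham. rewrite sumL_map. do 4 f_equal. apply sumL_ext. intros e.
  rewrite !spin_transp_config by auto. reflexivity.
Qed.

Lemma Omega_transp beta E m Y :
  Omega M beta E [] m (fun ss => Y (map transp_config ss)) = Omega M beta (map transp_edge E) [] m Y.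
Proof.
  assert (Hsum : forall Z : list (list bool) -> R,
    sumL (tuples (configs M) m) (fun ss => Z (map transp_config ss) * prodR (map (weight beta E []) ss)) =
    sumL (tuples (configs M) m) (fun ss => Z ss * prodR (map (weight beta (map transp_edge E) []) ss))).
  { intros Z.
    rewrite (sumL_ext_in _ _ (fun ss => (fun tt => Z tt * prodR (map (weight beta E []) (map transp_config tt)))
                                          (map transp_config ss))).
    2:{ intros ss Hss. apply In_tuples in Hss. destruct Hss as [_ Hss]. simpl. f_equal.
        rewrite !map_map. apply prodR_ext_in. intros s Hs.
        rewrite transp_config_invol; [reflexivity | apply In_configs, Hss; auto]. }
    rewrite <- (sumL_tuples_map transp_config (configs M) m
                  (fun tt => Z tt * prodR (map (weight beta E []) (map transp_config tt)))),
      (sumL_tuples_perm _ (configs M)).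
    - apply sumL_ext_in. intros ss Hss. apply In_tuples in Hss. destruct Hss as [_ Hss].
      f_equal. rewrite map_map. apply prodR_ext_in. intros s Hs.
      apply weight_transp, In_configs, Hss; auto.
    - apply NoDup_Permutation.
      + apply NoDup_map_in; [apply NoDup_configs|]. intros x y Hx Hy Hxy.
        apply In_configs in Hx, Hy. rewrite <- (transp_config_invol x), <- (transp_config_invol y), Hxy; auto.
      + apply NoDup_configs.
      + intros x. rewrite in_map_iff, In_configs. split.
        * intros [y [<- Hy]]. apply In_configs in Hy. rewrite length_transp_config; auto.
        * intros Hx. exists (transp_config x). split; [apply transp_config_invol; auto|].
          apply In_configs; rewrite length_transp_config; auto. }
  unfold Omega. rewrite Hsum. f_equal.
  specialize (Hsum (fun _ => 1)). simpl in Hsum.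
  rewrite (sumL_ext _ _ (fun ss => 1 * prodR (map (weight beta E []) ss))) by (intros; ring).
  rewrite Hsum. apply sumL_ext; intros; ring.
Qed.

Lemma qexp_bulk_transp alpha beta m Y :
  qexp_bulk M alpha (fun E => Omega M beta E [] m (fun ss => Y (map transp_config ss))) =
  qexp_bulk M alpha (fun E => Omega M beta E [] m Y).
Proof.
  change (qexp_bulk M alpha ?F) with (poisson_avg (alpha * INR M) (pairs M) F).
  rewrite (poisson_avg_ext _ _ _ (fun E => Omega M beta (map transp_edge E) [] m Y))
    by (intros; apply Omega_transp).
  apply (poisson_avg_map _ _ _ _ (fun E => Omega M beta E [] m Y)), transp_pairs.
Qed.
End Bounded.
End SiteTransposition.

(** After exchanging sites [j] and [N], the first [N] sites are all sites but [j]. *)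
Lemma sum_transp (x : nat -> R) j N : (j < S N)%nat ->
  sumL (sites N) (fun i => x (transp j N i)) = sumL (sites (S N)) x - x j.
Proof.
  intros Hj. rewrite <- (sumL_perm _ _ x (transp_sites j N (S N) Hj ltac:(lia))), sumL_map.
  unfold sites. rewrite seq_S, sumL_app. simpl. rewrite transp_k. ring.
Qed.

Lemma overlap_transp A ss j N :
  (j < S N)%nat -> Forall (fun a => (a < length ss)%nat) A -> (forall s, In s ss -> length s = S N) ->
  overlap N A (map (transp_config j N) ss) =
  / INR N * (sumL (sites (S N)) (replica_spins A ss) - replica_spins A ss j).
Proof.
  intros Hj HA Hs. unfold overlap. f_equal. rewrite <- sum_transp by auto.
  apply sumL_ext. intros i. apply prodR_ext_in. intros a Ha. rewrite Forall_forall in HA.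
  rewrite (nth_indep _ [] (transp_config j N [])), map_nth by (rewrite length_map; auto).
  apply (spin_transp_config j N (S N)); [lia | lia | apply Hs, nth_In; auto].
Qed.

Lemma delete_renormalize T x N : (1 <= N)%nat -> Rabs T <= INR (S N) -> Rabs x <= 1 ->
  Rabs (/ INR N * (T - x) - / INR (S N) * T) <= 2 / INR N.
Proof.
  intros HN HT Hx. rewrite S_INR in *. assert (Hn : 1 <= INR N) by (apply (le_INR 1); auto).
  replace (/ INR N * (T - x) - / (INR N + 1) * T) with (T / (INR N * (INR N + 1)) - x / INR N)
    by (field; lra).
  eapply Rle_trans; [apply Rabs_triang|]. rewrite Rabs_Ropp.
  unfold Rdiv. rewrite !Rabs_mult, !Rabs_inv, (Rabs_right (INR N * (INR N + 1))), (Rabs_right (INR N))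
    by (apply Rle_ge; nra).
  replace (2 * / INR N) with ((INR N + 1) * / (INR N * (INR N + 1)) + 1 * / INR N) by (field; lra).
  apply Rplus_le_compat; apply Rmult_le_compat_r; auto; left; apply Rinv_0_lt_compat; nra.
Qed.

Lemma mono_transp_close m mono N ss j :
  (1 <= N)%nat -> (j < S N)%nat -> valid_mono m mono -> length ss = m ->
  (forall s, In s ss -> length s = S N) ->
  Rabs (mono_val N mono (map (transp_config j N) ss) - mono_val (S N) mono ss)
  <= INR (length mono) * (2 / INR N).
Proof.
  intros HN Hj Hv Hl Hs. rewrite <- sumL_const.
  eapply Rle_trans; [apply prodR_diff; intros; apply overlap_abs|]. apply sumL_le. intros A HA.
  assert (HA' : Forall (fun a => (a < length ss)%nat) A).
  { unfold valid_mono in Hv. rewrite Forall_forall in Hv. rewrite Hl. apply (Hv A HA). }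
  rewrite overlap_transp by auto. apply delete_renormalize; auto; [|apply replica_spins_abs].
  replace (INR (S N)) with (INR (length (sites (S N))) * 1) by (unfold sites; rewrite length_seq; ring).
  apply sumL_abs_le. intros; apply replica_spins_abs.
Qed.

Definition site_average (m : nat) (mono : list (list nat)) (N : nat) (ss : list (list bool)) : R :=
  sumL (sites (S N)) (fun j => / INR (S N) * gauge_fixed_mono m mono N (map (transp_config j N) ss)).

Lemma site_average_abs m mono N ss : Rabs (site_average m mono N ss) <= 1.
Proof.
  assert (HM : 0 < INR (S N)) by (apply lt_0_INR; lia).
  unfold site_average. replace 1 with (INR (length (sites (S N))) * (/ INR (S N) * 1))
    by (unfold sites; rewrite length_seq; field; lra).
  apply sumL_abs_le. intros j _. rewrite Rabs_mult, Rabs_right by (apply Rle_ge; left; apply Rinv_0_lt_compat; auto).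
  apply Rmult_le_compat_l; [left; apply Rinv_0_lt_compat; auto | apply gauge_fixed_mono_abs].
Qed.

Lemma site_average_near_filled m mono N ss :
  (1 <= N)%nat -> valid_mono m mono -> length ss = m -> (forall s, In s ss -> length s = S N) ->
  Rabs (site_average m mono N ss - mono_val (S N) (fill m mono) ss) <= 2 * INR (length mono) / INR N.
Proof.
  intros HN Hv Hl Hs. rewrite fill_val.
  set (O := odd_set m mono). set (mv := mono_val (S N) mono ss).
  assert (HS : 0 < INR (S N)) by (apply lt_0_INR; lia).
  assert (HO : Forall (fun a => (a < length ss)%nat) O).
  { apply Forall_forall. intros a Ha. unfold O, odd_set in Ha. apply filter_In in Ha.
    destruct Ha as [Ha _]. apply in_seq in Ha. lia. }
  assert (Hextra : forall j, (j < S N)%nat ->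
            replica_spins O (map (transp_config j N) ss) N = replica_spins O ss j).
  { intros j Hj. apply prodR_ext_in. intros a Ha. rewrite Forall_forall in HO.
    rewrite (nth_indep _ [] (transp_config j N [])), map_nth by (rewrite length_map; auto).
    rewrite (spin_transp_config j N (S N)), transp_k by (try lia; apply Hs, nth_In; auto). reflexivity. }
  unfold site_average, gauge_fixed_mono. fold O.
  replace (mv * overlap (S N) O ss) with (sumL (sites (S N)) (fun j => / INR (S N) * (mv * replica_spins O ss j)))
    by (unfold overlap, replica_spins; rewrite !sumL_scal; ring).
  rewrite <- sumL_minus.
  replace (2 * INR (length mono) / INR N)
    with (INR (length (sites (S N))) * (/ INR (S N) * (INR (length mono) * (2 / INR N))))
    by (unfold sites; rewrite length_seq; field; split; [apply not_0_INR; lia | lra]).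
  apply sumL_abs_le. intros j Hj. unfold sites in Hj. apply in_seq in Hj.
  rewrite (Hextra j) by lia. rewrite <- Rmult_minus_distr_l, <- Rmult_minus_distr_r.
  rewrite !Rabs_mult, Rabs_right by (apply Rle_ge; left; apply Rinv_0_lt_compat; auto).
  apply Rmult_le_compat_l; [left; apply Rinv_0_lt_compat; auto|].
  rewrite <- (Rmult_1_r (INR (length mono) * _)).
  apply Rmult_le_compat; try apply Rabs_pos; [apply (mono_transp_close m); auto; lia | apply replica_spins_abs].
Qed.

(** By exchange symmetry, the quenched state of the gauge-fixed monomial equals
    that of its average over the choice of the extra site. *)
Lemma bulk_site_average alpha beta m mono N : 0 <= alpha ->
  qexp_bulk (S N) alpha (fun E => Omega (S N) beta E [] m (gauge_fixed_mono m mono N)) =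
  qexp_bulk (S N) alpha (fun E => Omega (S N) beta E [] m (site_average m mono N)).
Proof.
  intros Ha. assert (HM : 0 < INR (S N)) by (apply lt_0_INR; lia).
  change (qexp_bulk (S N) alpha ?F) with (poisson_avg (alpha * INR (S N)) (pairs (S N)) F).
  symmetry. unfold site_average. rewrite (poisson_avg_ext _ _ _ (fun E => sumL (sites (S N)) (fun j =>
    / INR (S N) * Omega (S N) beta E [] m (fun ss => gauge_fixed_mono m mono N (map (transp_config j N) ss)))))
    by (intros; apply Omega_sum).
  rewrite (poisson_avg_sum _ _ _ _ _ 1); [| apply Rmult_le_pos; [auto | apply pos_INR]
                                          | intros; apply Omega_bound; intros; apply gauge_fixed_mono_abs].
  rewrite (sumL_ext_in _ _ (fun _ => / INR (S N) * poisson_avg (alpha * INR (S N)) (pairs (S N))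
                                       (fun E => Omega (S N) beta E [] m (gauge_fixed_mono m mono N)))).
  - rewrite sumL_const. unfold sites. rewrite length_seq. field. lra.
  - intros j Hj. unfold sites in Hj. apply in_seq in Hj. f_equal.
    exact (qexp_bulk_transp j N (S N) ltac:(lia) ltac:(lia) alpha beta m (gauge_fixed_mono m mono N)).
Qed.

Theorem fillable_filled_bound alpha beta m mono N :
  0 <= alpha -> (1 <= N)%nat -> valid_mono m mono ->
  Rabs (qexp_t N alpha 1 (fun E K => Omega N beta E K m (mono_val N mono))
        - qexp_bulk (S N) alpha (fun E => Omega (S N) beta E [] m (mono_val (S N) (fill m mono))))
  <= 2 * INR (length mono) / INR N.
Proof.
  intros Ha HN Hv.
  rewrite <- (bulk_state_gauge_fixed N m alpha beta (gauge_fixed_mono m mono N) (mono_val N mono) 1);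
    auto; [|intros; apply mono_val_abs
          | intros ss bs Hss Hbs; apply In_tuples in Hss, Hbs; destruct Hss as [L1 Hs], Hbs as [L2 _];
            apply gauge_fixed_mono_gauge; auto; intros; apply In_configs; auto].
  rewrite bulk_site_average by auto.
  change (qexp_bulk (S N) alpha ?F) with (poisson_avg (alpha * INR (S N)) (pairs (S N)) F).
  apply (poisson_avg_diff_bound _ _ _ _ 1); [apply Rmult_le_pos; [auto | apply pos_INR]
    | intros; apply Omega_bound; intros; apply site_average_abs
    | intros; apply Omega_bound; intros; apply mono_val_abs|].
  intros E. rewrite <- Omega_minus. apply Omega_bound. intros ss Hss.
  apply In_tuples in Hss. destruct Hss as [Hl Hs].
  apply site_average_near_filled; auto. intros; apply In_configs; auto.
Qed.

Theorem theorem2 (alpha beta : R) (halpha : 0 <= alpha) :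
  (* part 1: omega~_{N,t=1}(s_{i1}..s_{in}) = omega_{N+1}(s_{i1}..s_{in} s_{N+1}^n) + O(1/N) *)
  (forall n : nat, (1 <= n)%nat ->
   exists C : R, forall (N : nat) (idx : list nat),
     (1 <= N)%nat -> length idx = n -> Forall (fun i => (i < N)%nat) idx ->
     Rabs (qexp_t N alpha 1 (fun E K => omega N beta E K (fun s => spin_mono s idx))
           - qexp_bulk (N + 1) alpha
               (fun E => omega (N + 1) beta E [] (fun s => spin_mono s idx * spin s N ^ n)))
     <= C / INR N)
  /\
  (* part 2: thermodynamic limit, fillable monomial at t=1 vs its filled version *)
  (forall (m : nat) (mono : list (list nat)),
     valid_mono m mono -> fillable m mono ->
     Un_cv (fun N =>
       qexp_t (S N) alpha 1 (fun E K => Omega (S N) beta E K m (mono_val (S N) mono))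
       - qexp_bulk (S N + 1) alpha
           (fun E => Omega (S N + 1) beta E [] m (mono_val (S N + 1) (fill m mono))))
     0).
Proof.
  split.
  - (* the identity is exact: the error constant is 0 *)
    intros n _. exists 0. intros N idx HN <- Hidx.
    rewrite Nat.add_1_r, spin_correlation_identity, Rminus_diag, Rabs_R0 by auto.
    unfold Rdiv. lra.
  -
    intros m mono Hv _.
    apply (Un_cv_harmonic_bound _ (2 * INR (length mono))). intros N.
    rewrite Nat.add_1_r. apply fillable_filled_bound; auto; lia.
Qed.
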